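(* Let $b_0=\frac{\sqrt2}{3\sqrt3}$, $P=D_0^3-(D_1^2+x_1^2D_n^2)D_0-b_0x_1^3D_n^3$ on $\mathbb{R}^{n+1}$, and let $\zeta_0$ be a zero of $C_0$ with $\pi<\arg\zeta_0\le\frac{19}{15}\pi$. Then there exist $R_0>0$ and $\theta_0\in(0,\pi/6]$ such that $-\frac13b_0^{-8/5}R_0^{8/5}e^{8i\theta_0/5}=\zeta_0$, and, with $\alpha=b_0^{1/5}R_0^{-1/5}e^{-i\theta_0/5}$ and $\beta=\frac13b_0^{-4/5}R_0^{4/5}e^{4i\theta_0/5}$, for every $\lambda>0$ the function $$U_\lambda(x)=\exp\big(ix_0\lambda^{1/2}R_0e^{i\theta_0}+ix_n\lambda\big)\,\mathcal{Y}(\lambda^{1/2}\alpha x_1+\beta;\zeta_0)$$ satisfies $PU_\lambda=0$ on $\mathbb{R}^{n+1}$; moreover, for each $\lambda>0$ the function $x_1\mapsto\mathcal{Y}(\lambda^{1/2}\alpha x_1+\beta;\zeta_0)$ belongs to the Schwartz space $\mathcal{S}(\mathbb{R})$, and $\sup_{\lambda>0,\,x_1\in\mathbb{R}}|\mathcal{Y}(\lambda^{1/2}\alpha x_1+\beta;\zeta_0)|<\infty$.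
   Context: $D_j=-i\partial_{x_j}$, $x=(x_0,x_1,x'',x_n)$. Arguments are taken in $[0,2\pi)$. Let $\omega=e^{2\pi i/5}$. $\mathcal{Y}(y;\zeta)$ is Sibuya's canonical solution of $w''(y)=(y^3+\zeta y)w(y)$: the unique solution entire in $(y,\zeta)$ with $\mathcal{Y}\sim y^{-3/4}\big[1+\sum_{N\ge1}B_Ny^{-N/2}\big]e^{-\frac25y^{5/2}-\zeta y^{1/2}}$ and $\mathcal{Y}'\sim y^{3/4}\big[-1+\sum_{N\ge1}C_Ny^{-N/2}\big]e^{-\frac25y^{5/2}-\zeta y^{1/2}}$ as $y\to\infty$ in closed subsectors of $|\arg y|<3\pi/5$, uniformly for $\zeta$ in compacts ($B_N,C_N$ polynomials in $\zeta$, principal branches). With $\mathcal{Y}_k(y;\zeta)=\mathcal{Y}(\omega^{-k}y;\omega^{-2k}\zeta)$, the Stokes coefficient $C_0(\zeta)$ is defined by $\mathcal{Y}_0=C_0(\zeta)\mathcal{Y}_1+\tilde C_0(\zeta)\mathcal{Y}_2$ (with $\tilde C_0\equiv-\omega$); $C_0$ is entire. Complex powers of $b_0,R_0$ are positive real powers. *)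

From Stdlib Require Import Reals Lra List.
Open Scope R_scope.

Definition Cx : Type := (R * R)%type.
Definition RtoC (r : R) : Cx := (r, 0).
Definition C0 : Cx := (0, 0).
Definition C1 : Cx := (1, 0).
Definition Ci : Cx := (0, 1).
Definition Cadd (z w : Cx) : Cx := (fst z + fst w, snd z + snd w).
Definition Copp (z : Cx) : Cx := (- fst z, - snd z).
Definition Csub (z w : Cx) : Cx := Cadd z (Copp w).
Definition Cmul (z w : Cx) : Cx :=
  (fst z * fst w - snd z * snd w, fst z * snd w + snd z * fst w).
Definition Cnorm (z : Cx) : R := sqrt (fst z * fst z + snd z * snd z).
Definition Cexp (z : Cx) : Cx := (exp (fst z) * cos (snd z), exp (fst z) * sin (snd z)).

Fixpoint Cpown (z : Cx) (k : nat) : Cx :=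
  match k with O => C1 | S k => Cmul z (Cpown z k) end.

(* principal argument, in (-PI, PI] *)
Definition Arg (z : Cx) : R :=
  let a := fst z in let b := snd z in
  if Rlt_dec 0 a then atan (b / a)
  else if Rlt_dec a 0 then
         (if Rle_dec 0 b then atan (b / a) + PI else atan (b / a) - PI)
  else if Rlt_dec 0 b then PI / 2
  else if Rlt_dec b 0 then - (PI / 2) else 0.

(* principal branch of z^w (z <> 0); set to 0 at z = 0 *)
Definition Cpow (z w : Cx) : Cx :=
  if Rlt_dec 0 (Cnorm z) then Cexp (Cmul w (ln (Cnorm z), Arg z)) else C0.

(* "arg z lies in (a, b]" with the paper's convention arg in [0, 2 PI),
   for 0 <= a < b < 2 PI *)
Definition arg_in (z : Cx) (a b : R) : Prop :=
  z <> C0 /\ exists th, a < th <= b /\ z = Cmul (RtoC (Cnorm z)) (Cexp (0, th)).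

(* polynomial in one complex variable, coefficient list (constant first) *)
Definition Cpoly (l : list Cx) (z : Cx) : Cx :=
  fold_right (fun a acc => Cadd a (Cmul z acc)) C0 l.

(* sum_{N=1}^{M} f N *)
Fixpoint Csum1 (f : nat -> Cx) (M : nat) : Cx :=
  match M with O => C0 | S M' => Cadd (Csum1 f M') (f M) end.

Definition Cderiv (g : Cx -> Cx) (z L : Cx) : Prop :=
  forall eps, 0 < eps -> exists delta, 0 < delta /\
    forall h : Cx, 0 < Cnorm h < delta ->
      Cnorm (Csub (Csub (g (Cadd z h)) (g z)) (Cmul L h)) <= eps * Cnorm h.

Definition entire2 (f : Cx -> Cx -> Cx) : Prop :=
  forall y z, exists a b : Cx, forall eps, 0 < eps -> exists delta, 0 < delta /\
    forall h k : Cx, Cnorm h + Cnorm k < delta ->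
      Cnorm (Csub (Csub (Csub (f (Cadd y h) (Cadd z k)) (f y z)) (Cmul a h)) (Cmul b k))
        <= eps * (Cnorm h + Cnorm k).

Definition RCderiv (g : R -> Cx) (t : R) (L : Cx) : Prop :=
  forall eps, 0 < eps -> exists delta, 0 < delta /\
    forall h : R, 0 < Rabs h < delta ->
      Cnorm (Csub (Csub (g (t + h)) (g t)) (Cmul (RtoC h) L)) <= eps * Rabs h.

Definition in_subsector (delta : R) (y : Cx) : Prop :=
  y <> C0 /\ Rabs (Arg y) <= 3 * PI / 5 - delta.

(* e^{2/5 y^{5/2} + zeta y^{1/2}} (reciprocal of the exponential factor) *)
Definition Efac (y zeta : Cx) : Cx :=
  Cexp (Cadd (Cmul (RtoC (2/5)) (Cpow y (RtoC (5/2)))) (Cmul zeta (Cpow y (RtoC (1/2))))).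

(* g(y;zeta) ~ y^p [s + sum_{N>=1} Cf_N(zeta) y^{-N/2}] e^{-2/5 y^{5/2} - zeta y^{1/2}}
   as y -> oo in closed subsectors of |arg y| < 3PI/5, uniformly for zeta in compacts
   (every compact set lies in a closed disc |zeta| <= r). *)
Definition asympt (g : Cx -> Cx -> Cx) (p : R) (s : Cx) (Cf : nat -> list Cx) : Prop :=
  forall delta r : R, 0 < delta -> forall M : nat,
    exists K y0 : R, forall y zeta : Cx,
      in_subsector delta y -> y0 <= Cnorm y -> Cnorm zeta <= r ->
      Cnorm (Csub (Cmul (Cmul (g y zeta) (Cpow y (RtoC (- p)))) (Efac y zeta))
                  (Cadd s (Csum1 (fun N => Cmul (Cpoly (Cf N) zeta)
                                               (Cpow y (RtoC (- INR N / 2)))) M)))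
        <= K * Rpower (Cnorm y) (- (INR M + 1) / 2).

Definition IsSibuya (Y : Cx -> Cx -> Cx) : Prop :=
  entire2 Y /\
  exists Yp Ypp : Cx -> Cx -> Cx,
    (forall y zeta, Cderiv (fun w => Y w zeta) y (Yp y zeta)) /\
    (forall y zeta, Cderiv (fun w => Yp w zeta) y (Ypp y zeta)) /\
    (forall y zeta, Ypp y zeta =
        Cmul (Cadd (Cpown y 3) (Cmul zeta y)) (Y y zeta)) /\
    (exists B : nat -> list Cx, asympt Y (- (3/4)) C1 B) /\
    (exists Cc : nat -> list Cx, asympt Yp (3/4) (Copp C1) Cc).

Definition omega : Cx := Cexp (0, 2 * PI / 5).
Definition Cinvomega : Cx := Cexp (0, - (2 * PI / 5)).

Definition Yk (Y : Cx -> Cx -> Cx) (k : nat) (y zeta : Cx) : Cx :=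
  Y (Cmul (Cpown Cinvomega k) y) (Cmul (Cpown Cinvomega (2 * k)) zeta).

(* Stokes coefficient: C0(zeta) = c means Y_0 = c Y_1 + Cx~_0 Y_2 for some Cx~_0 *)
Definition StokesC0 (Y : Cx -> Cx -> Cx) (zeta c : Cx) : Prop :=
  exists ct : Cx, forall y : Cx,
    Yk Y 0 y zeta = Cadd (Cmul c (Yk Y 1 y zeta)) (Cmul ct (Yk Y 2 y zeta)).

(* points of R^{n+1}: x : nat -> R, coordinates x 0, ..., x n *)
Definition upd (x : nat -> R) (j : nat) (t : R) : nat -> R :=
  fun k => if Nat.eqb k j then t else x k.

Definition HasPartial (j : nat) (f g : (nat -> R) -> Cx) : Prop :=
  forall x, RCderiv (fun t => f (upd x j t)) (x j) (g x).

Definition HasD (j : nat) (f g : (nat -> R) -> Cx) : Prop :=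
  exists h, HasPartial j f h /\ forall x, g x = Cmul (Copp Ci) (h x).

Definition b0 : R := sqrt 2 / (3 * sqrt 3).

Definition P_annihilates (n : nat) (U : (nat -> R) -> Cx) : Prop :=
  exists U0 U00 U000 U01 U011 U0n U0nn Un Unn Unnn : (nat -> R) -> Cx,
    HasD 0 U U0 /\ HasD 0 U0 U00 /\ HasD 0 U00 U000 /\
    HasD 1 U0 U01 /\ HasD 1 U01 U011 /\
    HasD n U0 U0n /\ HasD n U0n U0nn /\
    HasD n U Un /\ HasD n Un Unn /\ HasD n Unn Unnn /\
    forall x, Csub (Csub (U000 x)
                         (Cadd (U011 x) (Cmul (RtoC (x 1%nat ^ 2)) (U0nn x))))
                   (Cmul (RtoC (b0 * x 1%nat ^ 3)) (Unnn x)) = C0.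

Definition InSchwartz (f : R -> Cx) : Prop :=
  exists F : nat -> R -> Cx,
    (forall t, F 0%nat t = f t) /\
    (forall m t, RCderiv (F m) t (F (S m) t)) /\
    (forall k m : nat, exists Mb, forall t, Rabs t ^ k * Cnorm (F m t) <= Mb).

(* With [U = e^{i x0 mu + i xn lam} Y (c x1 + beta; zeta0)], Sibuya's equation
   [Y'' = (y^3 + zeta0 y) Y] turns [P U = 0] into a cubic polynomial identity in [x1]; its
   four coefficients vanish exactly for [mu = lam^(1/2) R0 e^{i th0}], [c = lam^(1/2) alpha]
   and the stated [alpha], [beta], [zeta0], and the argument condition on [zeta0] makes
   [R0 > 0], [th0 in (0, PI/6]] solvable.
   For the decay, the line [t alpha + beta] leaves to the right inside the sector where
   Sibuya's asymptotics make [Y] and [Y'] superexponentially small. To the left it leaves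
   inside the preimage of that sector under the rotation by [omega^-2], and there
   [C0 (zeta0) = 0] reduces the Stokes relation to [Y = C~0 Y_2], which decays as well.
   Every derivative of [t |-> Y (c t + beta)] is a polynomial combination of [Y] and [Y']
   along the line, so this decay gives the Schwartz bounds. *)

From Stdlib Require Import Reals Lra Lia Psatz List.
Open Scope R_scope.

(** * Complex arithmetic *)

Lemma Cx_ring_theory : ring_theory C0 C1 Cadd Cmul Csub Copp (@eq Cx).
Proof.
  constructor; intros;
    repeat match goal with z : Cx |- _ => destruct z end;
    unfold Csub, Cadd, Cmul, Copp, C0, C1; simpl; f_equal; ring.
Qed.
Add Ring Cx_ring : Cx_ring_theory.

Lemma RtoC_mul a b : RtoC (a * b) = Cmul (RtoC a) (RtoC b).
Proof. unfold RtoC, Cmul; simpl; f_equal; ring. Qed.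
Lemma RtoC_add a b : RtoC (a + b) = Cadd (RtoC a) (RtoC b).
Proof. unfold RtoC, Cadd; simpl; f_equal; ring. Qed.
Lemma RtoC_pow a k : RtoC (a ^ k) = Cpown (RtoC a) k.
Proof. induction k as [|k IH]; simpl; [reflexivity | now rewrite RtoC_mul, IH]. Qed.

Lemma Cmul_C1_l z : Cmul C1 z = z.
Proof. ring. Qed.
Lemma Ci_mul_opp : Cmul (Copp Ci) Ci = C1.
Proof. unfold Cmul, Copp, Ci, C1; simpl; f_equal; ring. Qed.

Lemma Cnorm_ge0 z : 0 <= Cnorm z.
Proof. apply sqrt_pos. Qed.
Lemma Cnorm_mul z w : Cnorm (Cmul z w) = Cnorm z * Cnorm w.
Proof.
  destruct z as [a b], w as [c d]; unfold Cnorm, Cmul; simpl.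
  rewrite <- sqrt_mult by nra. f_equal; ring.
Qed.
Lemma Cnorm_RtoC a : Cnorm (RtoC a) = Rabs a.
Proof. unfold Cnorm, RtoC; simpl. rewrite Rmult_0_l, Rplus_0_r. apply sqrt_Rsqr_abs. Qed.
Lemma Cnorm_opp z : Cnorm (Copp z) = Cnorm z.
Proof. destruct z; unfold Cnorm, Copp; simpl; f_equal; ring. Qed.
Lemma Cnorm_C0 : Cnorm C0 = 0.
Proof. unfold Cnorm, C0; simpl. rewrite Rmult_0_l, Rplus_0_l. apply sqrt_0. Qed.
Lemma Cnorm_C1 : Cnorm C1 = 1.
Proof. unfold Cnorm, C1; simpl. rewrite Rmult_0_l, Rplus_0_r, Rmult_1_l. apply sqrt_1. Qed.
Lemma Cnorm_pown z k : Cnorm (Cpown z k) = Cnorm z ^ k.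
Proof. induction k as [|k IH]; simpl; [apply Cnorm_C1 | now rewrite Cnorm_mul, IH]. Qed.

Lemma Cnorm_fst z : Rabs (fst z) <= Cnorm z.
Proof.
  destruct z as [a b]; unfold Cnorm; simpl.
  rewrite <- sqrt_Rsqr_abs. apply sqrt_le_1_alt. unfold Rsqr; nra.
Qed.
Lemma Cnorm_snd z : Rabs (snd z) <= Cnorm z.
Proof.
  destruct z as [a b]; unfold Cnorm; simpl.
  rewrite <- sqrt_Rsqr_abs. apply sqrt_le_1_alt. unfold Rsqr; nra.
Qed.

Lemma Cnorm_triangle z w : Cnorm (Cadd z w) <= Cnorm z + Cnorm w.
Proof.
  destruct z as [a b], w as [c d]; unfold Cnorm, Cadd; simpl.
  set (A := a*a+b*b); set (B := c*c+d*d).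
  assert (HA : 0 <= A) by (unfold A; nra). assert (HB : 0 <= B) by (unfold B; nra).
  assert (Hcs : a*c+b*d <= sqrt A * sqrt B).
  { rewrite <- sqrt_mult by auto.
    destruct (Rle_dec (a*c+b*d) 0). { pose proof (sqrt_pos (A*B)); lra. }
    rewrite <- (sqrt_Rsqr (a*c+b*d)) by lra. apply sqrt_le_1_alt.
    pose proof (Rle_0_sqr (a*d-b*c)). unfold Rsqr, A, B in *. nra. }
  apply Rsqr_incr_0; [| apply sqrt_pos | pose proof (sqrt_pos A); pose proof (sqrt_pos B); lra].
  unfold Rsqr. rewrite sqrt_sqrt by (apply Rplus_le_le_0_compat; apply Rle_0_sqr).
  replace ((sqrt A + sqrt B) * (sqrt A + sqrt B)) with
    (sqrt A * sqrt A + sqrt B * sqrt B + 2 * (sqrt A * sqrt B)) by ring.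
  rewrite !sqrt_sqrt by auto. unfold A, B in *. nra.
Qed.
Lemma Cnorm_sub_triangle z w : Cnorm (Csub z w) <= Cnorm z + Cnorm w.
Proof. unfold Csub. rewrite <- (Cnorm_opp w). apply Cnorm_triangle. Qed.
Lemma Cnorm_reverse_triangle z w : Cnorm z - Cnorm w <= Cnorm (Cadd z w).
Proof.
  pose proof (Cnorm_triangle (Cadd z w) (Copp w)) as H.
  replace (Cadd (Cadd z w) (Copp w)) with z in H by ring. rewrite Cnorm_opp in H. lra.
Qed.
Lemma Cnorm_le_components z : Cnorm z <= Rabs (fst z) + Rabs (snd z).
Proof.
  destruct z as [a b]; simpl.
  replace (a, b) with (Cadd (RtoC a) (Cmul Ci (RtoC b)))
    by (unfold Cadd, Cmul, RtoC, Ci; simpl; f_equal; ring).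
  eapply Rle_trans; [apply Cnorm_triangle |].
  rewrite Cnorm_mul, !Cnorm_RtoC.
  replace (Cnorm Ci) with 1; [lra |].
  unfold Cnorm, Ci; simpl. rewrite Rmult_0_l, Rplus_0_l, Rmult_1_l. symmetry; apply sqrt_1.
Qed.

Lemma Cnorm_eq0 z : Cnorm z = 0 -> z = C0.
Proof.
  destruct z as [a b]; unfold Cnorm; simpl; intro H.
  assert (a*a+b*b = 0) by (apply sqrt_eq_0; [nra | exact H]). unfold C0; f_equal; nra.
Qed.
Lemma Cnorm_gt0 z : z <> C0 -> 0 < Cnorm z.
Proof.
  intro H. destruct (Cnorm_ge0 z) as [|E]; auto.
  symmetry in E. apply Cnorm_eq0 in E. contradiction.
Qed.

Lemma Cexp_add z w : Cexp (Cadd z w) = Cmul (Cexp z) (Cexp w).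
Proof.
  destruct z as [a b], w as [c d]; unfold Cexp, Cadd, Cmul; simpl.
  rewrite exp_plus, cos_plus, sin_plus. f_equal; ring.
Qed.
Lemma Cnorm_Cexp z : Cnorm (Cexp z) = exp (fst z).
Proof.
  destruct z as [a b]; unfold Cnorm, Cexp; simpl.
  replace (exp a * cos b * (exp a * cos b) + exp a * sin b * (exp a * sin b))
    with (exp a * exp a * (sin b * sin b + cos b * cos b)) by ring.
  pose proof (sin2_cos2 b) as H. unfold Rsqr in H. rewrite H, Rmult_1_r.
  apply sqrt_square. pose proof (exp_pos a); lra.
Qed.
Lemma Cexp_C0 : Cexp C0 = C1.
Proof. unfold Cexp, C0, C1; simpl. rewrite exp_0, cos_0, sin_0. f_equal; ring. Qed.

Lemma Cexp_i_add a b : Cexp (0, a + b) = Cmul (Cexp (0, a)) (Cexp (0, b)).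
Proof. rewrite <- Cexp_add. f_equal. unfold Cadd; simpl; f_equal; ring. Qed.
Lemma Cnorm_Cexp_i a : Cnorm (Cexp (0, a)) = 1.
Proof. rewrite Cnorm_Cexp; apply exp_0. Qed.

(** * Derivatives along real lines *)

Definition line (c d : Cx) (s : R) : Cx := Cadd (Cmul (RtoC s) c) d.

Lemma RCderiv_components g t L :
  RCderiv g t L <->
  derivable_pt_lim (fun s => fst (g s)) t (fst L) /\
  derivable_pt_lim (fun s => snd (g s)) t (snd L).
Proof.
  split.
  - intro H. split; intros eps Heps;
      destruct (H (eps/2)) as [d [Hd Hh]]; try lra;
      exists (mkposreal d Hd); intros h Hh0 Hhd; simpl in Hhd;
      assert (Hhpos : 0 < Rabs h) by (apply Rabs_pos_lt; auto);
      specialize (Hh h (conj Hhpos Hhd));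
      [ pose proof (Cnorm_fst (Csub (Csub (g (t + h)) (g t)) (Cmul (RtoC h) L))) as Hc
      | pose proof (Cnorm_snd (Csub (Csub (g (t + h)) (g t)) (Cmul (RtoC h) L))) as Hc ];
      destruct (g (t + h)) as [p q], (g t) as [p' q'], L as [l1 l2];
      unfold Csub, Cadd, Copp, Cmul, RtoC in Hc, Hh; simpl in *;
      [ replace ((p - p') / h - l1) with ((p + - p' + - (h * l1 - 0 * l2)) / h) by (field; auto)
      | replace ((q - q') / h - l2) with ((q + - q' + - (h * l2 + 0 * l1)) / h) by (field; auto) ];
      unfold Rdiv; rewrite Rabs_mult, Rabs_inv;
      apply Rmult_lt_reg_r with (Rabs h); auto;
      rewrite Rmult_assoc, Rinv_l by lra; nra.
  - intros [H1 H2] eps Heps.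
    destruct (H1 (eps/2)) as [d1 Hd1]; try lra.
    destruct (H2 (eps/2)) as [d2 Hd2]; try lra.
    exists (Rmin d1 d2). split; [apply Rmin_pos; apply cond_pos |].
    intros h [Hh0 Hhd].
    assert (hne : h <> 0) by (intro; subst; rewrite Rabs_R0 in Hh0; lra).
    specialize (Hd1 h hne ltac:(pose proof (Rmin_l d1 d2); lra)).
    specialize (Hd2 h hne ltac:(pose proof (Rmin_r d1 d2); lra)).
    eapply Rle_trans; [apply Cnorm_le_components |].
    destruct (g (t+h)) as [p q], (g t) as [p' q'], L as [l1 l2]; simpl in *.
    replace (p + - p' + - (h * l1 - 0 * l2)) with (((p - p')/h - l1) * h) by (field; auto).
    replace (q + - q' + - (h * l2 + 0 * l1)) with (((q - q')/h - l2) * h) by (field; auto).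
    rewrite !Rabs_mult. nra.
Qed.

Lemma RCderiv_ext f g t L : (forall s, f s = g s) -> RCderiv f t L -> RCderiv g t L.
Proof.
  intros E H eps He. destruct (H eps He) as [d [Hd Hh]]. exists d; split; auto.
  intros h Hh'. rewrite <- !E. auto.
Qed.

Lemma RCderiv_ext_val f t L L' : L = L' -> RCderiv f t L -> RCderiv f t L'.
Proof. now intros <-. Qed.

Lemma RCderiv_const k t : RCderiv (fun _ => k) t C0.
Proof. rewrite RCderiv_components; simpl; split; apply derivable_pt_lim_const. Qed.

Lemma RCderiv_add f g t Lf Lg : RCderiv f t Lf -> RCderiv g t Lg ->
  RCderiv (fun s => Cadd (f s) (g s)) t (Cadd Lf Lg).
Proof.
  rewrite !RCderiv_components. intros [F1 F2] [G1 G2].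
  split; now apply derivable_pt_lim_plus.
Qed.

Lemma RCderiv_mul f g t Lf Lg : RCderiv f t Lf -> RCderiv g t Lg ->
  RCderiv (fun s => Cmul (f s) (g s)) t (Cadd (Cmul Lf (g t)) (Cmul (f t) Lg)).
Proof.
  rewrite !RCderiv_components. intros [F1 F2] [G1 G2]. split.
  - eapply derivable_pt_lim_ext; [intro s; reflexivity |].
    replace (fst (Cadd (Cmul Lf (g t)) (Cmul (f t) Lg))) with
      ((fst Lf * fst (g t) + fst (f t) * fst Lg) - (snd Lf * snd (g t) + snd (f t) * snd Lg))
      by (simpl; ring).
    apply derivable_pt_lim_minus; apply derivable_pt_lim_mult; auto.
  - eapply derivable_pt_lim_ext; [intro s; reflexivity |].
    replace (snd (Cadd (Cmul Lf (g t)) (Cmul (f t) Lg))) with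
      ((fst Lf * snd (g t) + fst (f t) * snd Lg) + (snd Lf * fst (g t) + snd (f t) * fst Lg))
      by (simpl; ring).
    apply derivable_pt_lim_plus; apply derivable_pt_lim_mult; auto.
Qed.

Lemma RCderiv_scale k f t L : RCderiv f t L -> RCderiv (fun s => Cmul k (f s)) t (Cmul k L).
Proof.
  intro H. eapply RCderiv_ext_val; [| apply (RCderiv_mul _ _ t _ _ (RCderiv_const k t) H)].
  ring.
Qed.

Lemma derivable_pt_lim_affine a b t : derivable_pt_lim (fun s => s * a + b) t a.
Proof.
  intros eps He. exists (mkposreal 1 Rlt_0_1). intros h Hh _.
  replace (((t + h) * a + b - (t * a + b)) / h - a) with 0 by (field; auto).
  rewrite Rabs_R0; auto.
Qed.

Lemma RCderiv_line c d t : RCderiv (line c d) t c.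
Proof.
  unfold line. rewrite RCderiv_components. destruct c as [c1 c2], d as [d1 d2].
  unfold Cadd, Cmul, RtoC; simpl.
  split; [ eapply derivable_pt_lim_ext; [| apply (derivable_pt_lim_affine c1 d1)]
         | eapply derivable_pt_lim_ext; [| apply (derivable_pt_lim_affine c2 d2)] ];
    intro; simpl; ring.
Qed.

Lemma RCderiv_Cexp_line k d t :
  RCderiv (fun s => Cexp (line k d s)) t (Cmul k (Cexp (line k d t))).
Proof.
  destruct k as [k1 k2], d as [d1 d2].
  rewrite RCderiv_components; unfold line, Cexp, Cadd, Cmul, RtoC; simpl.
  pose proof (derivable_pt_lim_comp _ exp _ _ _ (derivable_pt_lim_affine k1 d1 t)
                (derivable_pt_lim_exp _)) as Dexp.
  pose proof (derivable_pt_lim_comp _ cos _ _ _ (derivable_pt_lim_affine k2 d2 t)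
                (derivable_pt_lim_cos _)) as Dcos.
  pose proof (derivable_pt_lim_comp _ sin _ _ _ (derivable_pt_lim_affine k2 d2 t)
                (derivable_pt_lim_sin _)) as Dsin.
  pose proof (derivable_pt_lim_mult _ _ _ _ _ Dexp Dcos) as Dre.
  pose proof (derivable_pt_lim_mult _ _ _ _ _ Dexp Dsin) as Dim.
  unfold comp, mult_fct in Dre, Dim.
  replace (t * k1 - 0 * k2 + d1) with (t * k1 + d1) by ring.
  replace (t * k2 + 0 * k1 + d2) with (t * k2 + d2) by ring.
  split; [ revert Dre | revert Dim ];
    match goal with |- derivable_pt_lim _ _ ?l -> derivable_pt_lim _ _ ?l' =>
      replace l' with l by ring end;
    apply derivable_pt_lim_ext; intro s; do 3 f_equal; ring.
Qed.

Lemma RCderiv_comp_line g c d t L :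
  Cderiv g (line c d t) L -> RCderiv (fun s => g (line c d s)) t (Cmul c L).
Proof.
  intro H.
  destruct (Req_dec (Cnorm c) 0) as [Hc | Hc].
  - apply Cnorm_eq0 in Hc. subst c.
    eapply RCderiv_ext_val; [| eapply RCderiv_ext; [| apply (RCderiv_const (g (line C0 d t)))]].
    + ring.
    + intro s. unfold line. f_equal. ring.
  - pose proof (Cnorm_ge0 c).
    intros eps He. destruct (H (eps / Cnorm c)) as [dl [Hdl Hh]].
    { apply Rdiv_lt_0_compat; lra. }
    exists (dl / Cnorm c). split; [apply Rdiv_lt_0_compat; lra |].
    intros h [Hh0 Hhd].
    specialize (Hh (Cmul (RtoC h) c)).
    rewrite Cnorm_mul, Cnorm_RtoC in Hh.
    replace (line c d (t + h)) with (Cadd (line c d t) (Cmul (RtoC h) c))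
      by (unfold line; rewrite RtoC_add; ring).
    replace (Cmul (RtoC h) (Cmul c L)) with (Cmul L (Cmul (RtoC h) c)) by ring.
    eapply Rle_trans; [apply Hh |].
    + split; [apply Rmult_lt_0_compat; lra |].
      apply Rmult_lt_reg_r with (/ Cnorm c); [apply Rinv_0_lt_compat; lra |].
      rewrite Rmult_assoc, Rinv_r by lra. unfold Rdiv in Hhd. lra.
    + right. field. lra.
Qed.

(** * Schwartz decay along a line *)

Fixpoint poly_add (p q : list Cx) : list Cx :=
  match p, q with
  | nil, _ => q
  | _, nil => p
  | a :: p', b :: q' => Cadd a b :: poly_add p' q'
  end.
Definition poly_scale (k : Cx) (p : list Cx) : list Cx := map (Cmul k) p.
Fixpoint poly_deriv (p : list Cx) : list Cx :=
  match p with nil => nil | a :: p' => poly_add p' (C0 :: poly_deriv p') end.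

Lemma Cpoly_add p q z : Cpoly (poly_add p q) z = Cadd (Cpoly p z) (Cpoly q z).
Proof.
  revert q; induction p as [|a p IH]; intros [|b q]; simpl; try ring.
  rewrite IH. ring.
Qed.
Lemma Cpoly_scale k p z : Cpoly (poly_scale k p) z = Cmul k (Cpoly p z).
Proof. induction p as [|a p IH]; simpl; [ring | rewrite IH; ring]. Qed.

Lemma RCderiv_Cpoly_line p c d t :
  RCderiv (fun s => Cpoly p (line c d s)) t (Cmul c (Cpoly (poly_deriv p) (line c d t))).
Proof.
  induction p as [|a p IH]; simpl.
  - eapply RCderiv_ext_val; [| apply RCderiv_const]. ring.
  - eapply RCderiv_ext_val;
      [| exact (RCderiv_add _ _ t _ _ (RCderiv_const a t)
                  (RCderiv_mul _ _ t _ _ (RCderiv_line c d t) IH))].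
    rewrite Cpoly_add. simpl. ring.
Qed.

Fixpoint coef_norm_sum (p : list Cx) : R :=
  match p with nil => 0 | a :: p' => Cnorm a + coef_norm_sum p' end.

Lemma coef_norm_sum_ge0 p : 0 <= coef_norm_sum p.
Proof. induction p; simpl; [lra | pose proof (Cnorm_ge0 a); lra]. Qed.

Lemma Cpoly_norm_bound p z : Cnorm (Cpoly p z) <= coef_norm_sum p * (1 + Cnorm z) ^ length p.
Proof.
  induction p as [|a p IH]; simpl.
  - rewrite Cnorm_C0. lra.
  - pose proof (Cnorm_ge0 z). pose proof (Cnorm_ge0 a). pose proof (coef_norm_sum_ge0 p).
    set (X := (1 + Cnorm z) ^ length p) in *.
    assert (1 <= X) by (apply pow_R1_Rle; lra).
    eapply Rle_trans; [apply Cnorm_triangle |]. rewrite Cnorm_mul.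
    assert (Cnorm z * Cnorm (Cpoly p z) <= (1 + Cnorm z) * (coef_norm_sum p * X))
      by (apply Rmult_le_compat; try lra; apply Cnorm_ge0).
    assert (1 <= (1 + Cnorm z) * X) by nra.
    assert (Cnorm a <= Cnorm a * ((1 + Cnorm z) * X)) by nra.
    nra.
Qed.

Lemma Cpoly_weighted_bound p g N M z :
  (1 + Cnorm z) ^ (N + length p) * Cnorm g <= M ->
  (1 + Cnorm z) ^ N * (Cnorm (Cpoly p z) * Cnorm g) <= coef_norm_sum p * M.
Proof.
  rewrite pow_add. intro H.
  pose proof (Cnorm_ge0 z). pose proof (Cnorm_ge0 g). pose proof (coef_norm_sum_ge0 p).
  assert (0 <= (1 + Cnorm z) ^ N) by (apply pow_le; lra).
  apply Rle_trans with
    ((1 + Cnorm z) ^ N * (coef_norm_sum p * (1 + Cnorm z) ^ length p * Cnorm g)).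
  - apply Rmult_le_compat_l; auto. apply Rmult_le_compat_r; auto. apply Cpoly_norm_bound.
  - replace ((1 + Cnorm z) ^ N * (coef_norm_sum p * (1 + Cnorm z) ^ length p * Cnorm g))
      with (coef_norm_sum p * ((1 + Cnorm z) ^ N * (1 + Cnorm z) ^ length p * Cnorm g)) by ring.
    apply Rmult_le_compat_l; auto.
Qed.

Definition decays_on_line (g : Cx -> Cx) (c d : Cx) : Prop :=
  forall N : nat, exists M, forall t : R, (1 + Cnorm (line c d t)) ^ N * Cnorm (g (line c d t)) <= M.

Lemma line_param_bound c d t :
  c <> C0 -> Rabs t <= (1 + Cnorm d) / Cnorm c * (1 + Cnorm (line c d t)).
Proof.
  intro Hc. pose proof (Cnorm_gt0 c Hc).
  pose proof (Cnorm_ge0 (line c d t)). pose proof (Cnorm_ge0 d).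
  assert (Rabs t * Cnorm c <= (1 + Cnorm d) * (1 + Cnorm (line c d t))).
  { rewrite <- Cnorm_RtoC, <- Cnorm_mul.
    replace (Cmul (RtoC t) c) with (Csub (line c d t) d) by (unfold line; ring).
    eapply Rle_trans; [apply Cnorm_sub_triangle | nra]. }
  unfold Rdiv. apply Rmult_le_reg_r with (Cnorm c); auto.
  replace ((1 + Cnorm d) * / Cnorm c * (1 + Cnorm (line c d t)) * Cnorm c)
    with ((1 + Cnorm d) * (1 + Cnorm (line c d t))) by (field; lra).
  lra.
Qed.

Lemma line_rescale c d s t : line (Cmul (RtoC s) c) d t = line c d (s * t).
Proof. unfold line. rewrite RtoC_mul. ring. Qed.

Lemma decays_on_line_rescale g c d s :
  decays_on_line g c d -> decays_on_line g (Cmul (RtoC s) c) d.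
Proof. intros D N. destruct (D N) as [M HM]. exists M. intro t. rewrite line_rescale. apply HM. Qed.

Lemma decays_on_line_bounded g c d :
  decays_on_line g c d -> exists M, forall t, Cnorm (g (line c d t)) <= M.
Proof.
  intro D. destruct (D 0%nat) as [M HM]. exists M. intro t.
  specialize (HM t). simpl in HM. rewrite Rmult_1_l in HM. exact HM.
Qed.

Lemma InSchwartz_ext f g : (forall t, f t = g t) -> InSchwartz f -> InSchwartz g.
Proof.
  intros E (F & H0 & HD & HB). exists F. repeat split; auto.
  intro t. rewrite H0. apply E.
Qed.

Section Derivatives_along_line.
Variables (G H : Cx -> Cx) (zeta c d : Cx).
Hypothesis HG : forall y, Cderiv G y (H y).
Hypothesis HH : forall y, Cderiv H y (Cmul (Cadd (Cpown y 3) (Cmul zeta y)) (G y)).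

Definition poly_mul_potential (q : list Cx) : list Cx :=
  poly_add (C0 :: C0 :: C0 :: q) (poly_scale zeta (C0 :: q)).

Lemma Cpoly_mul_potential q z :
  Cpoly (poly_mul_potential q) z = Cmul (Cadd (Cpown z 3) (Cmul zeta z)) (Cpoly q z).
Proof. unfold poly_mul_potential. rewrite Cpoly_add, Cpoly_scale. simpl. ring. Qed.

(* Along the line, every derivative of [G] has the form [P G + Q H] with polynomial [P], [Q]:
   [G' = H] and [H' = (y^3 + zeta y) G] close the family under differentiation. *)
Definition combo (PQ : list Cx * list Cx) (t : R) : Cx :=
  Cadd (Cmul (Cpoly (fst PQ) (line c d t)) (G (line c d t)))
       (Cmul (Cpoly (snd PQ) (line c d t)) (H (line c d t))).

Definition combo_deriv (PQ : list Cx * list Cx) : list Cx * list Cx :=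
  (poly_scale c (poly_add (poly_deriv (fst PQ)) (poly_mul_potential (snd PQ))),
   poly_scale c (poly_add (fst PQ) (poly_deriv (snd PQ)))).

Lemma RCderiv_combo PQ t : RCderiv (combo PQ) t (combo (combo_deriv PQ) t).
Proof.
  unfold combo.
  pose proof (RCderiv_comp_line G c d t _ (HG (line c d t))) as DG.
  pose proof (RCderiv_comp_line H c d t _ (HH (line c d t))) as DH.
  eapply RCderiv_ext_val;
    [| exact (RCderiv_add _ _ t _ _
                (RCderiv_mul _ _ t _ _ (RCderiv_Cpoly_line (fst PQ) c d t) DG)
                (RCderiv_mul _ _ t _ _ (RCderiv_Cpoly_line (snd PQ) c d t) DH))].
  unfold combo_deriv; cbn [fst snd].
  rewrite !Cpoly_scale, !Cpoly_add, Cpoly_mul_potential. ring.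
Qed.

Definition line_derivative (m : nat) : R -> Cx := combo (Nat.iter m combo_deriv (C1 :: nil, nil)).

Lemma line_derivative_0 t : line_derivative 0 t = G (line c d t).
Proof. unfold line_derivative, combo; simpl. ring. Qed.

Lemma RCderiv_line_derivative m t : RCderiv (line_derivative m) t (line_derivative (S m) t).
Proof. apply RCderiv_combo. Qed.

Hypothesis DG : decays_on_line G c d.
Hypothesis DH : decays_on_line H c d.

Lemma combo_decays PQ N :
  exists M, forall t, (1 + Cnorm (line c d t)) ^ N * Cnorm (combo PQ t) <= M.
Proof.
  destruct PQ as [P Q].
  destruct (DG (N + length P)%nat) as [MG HMG].
  destruct (DH (N + length Q)%nat) as [MH HMH].
  exists (coef_norm_sum P * MG + coef_norm_sum Q * MH). intro t. unfold combo; cbn [fst snd].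
  set (s := line c d t) in *.
  pose proof (Cpoly_weighted_bound P (G s) N MG s (HMG t)).
  pose proof (Cpoly_weighted_bound Q (H s) N MH s (HMH t)).
  assert (0 <= (1 + Cnorm s) ^ N) by (apply pow_le; pose proof (Cnorm_ge0 s); lra).
  apply Rle_trans with
    ((1 + Cnorm s) ^ N * (Cnorm (Cpoly P s) * Cnorm (G s) + Cnorm (Cpoly Q s) * Cnorm (H s))).
  - apply Rmult_le_compat_l; auto. rewrite <- !Cnorm_mul. apply Cnorm_triangle.
  - lra.
Qed.

Lemma InSchwartz_of_decays_on_line : c <> C0 -> InSchwartz (fun t => G (line c d t)).
Proof.
  intro Hc. exists line_derivative.
  split; [exact line_derivative_0 | split; [exact RCderiv_line_derivative |]].
  intros k m.
  destruct (combo_decays (Nat.iter m combo_deriv (C1 :: nil, nil)) k) as [M HM].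
  set (K0 := (1 + Cnorm d) / Cnorm c).
  exists (K0 ^ k * M). intro t.
  specialize (HM t). fold (line_derivative m t) in HM.
  assert (Ht : Rabs t ^ k <= K0 ^ k * (1 + Cnorm (line c d t)) ^ k).
  { rewrite <- Rpow_mult_distr. apply pow_incr.
    split; [apply Rabs_pos | now apply line_param_bound]. }
  assert (0 <= K0 ^ k).
  { apply pow_le. unfold K0. pose proof (Cnorm_ge0 d).
    apply Rle_mult_inv_pos; [lra | now apply Cnorm_gt0]. }
  pose proof (Cnorm_ge0 (line_derivative m t)).
  apply Rle_trans with (K0 ^ k * (1 + Cnorm (line c d t)) ^ k * Cnorm (line_derivative m t)).
  - apply Rmult_le_compat_r; auto.
  - rewrite Rmult_assoc. now apply Rmult_le_compat_l.
Qed.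

End Derivatives_along_line.

(** * Polar form and the size of the asymptotic factor *)

Definition polar (r phi : R) : Cx := Cmul (RtoC r) (Cexp (0, phi)).

Lemma polar_components r phi : polar r phi = (r * cos phi, r * sin phi).
Proof. unfold polar, Cmul, Cexp, RtoC; simpl. rewrite exp_0. f_equal; ring. Qed.

Lemma polar_mul r1 p1 r2 p2 : Cmul (polar r1 p1) (polar r2 p2) = polar (r1 * r2) (p1 + p2).
Proof. unfold polar. rewrite Cexp_i_add, RtoC_mul. ring. Qed.

Lemma Cnorm_polar r phi : 0 <= r -> Cnorm (polar r phi) = r.
Proof.
  intro. unfold polar. rewrite Cnorm_mul, Cnorm_RtoC, Cnorm_Cexp_i, Rabs_right; lra.
Qed.

Lemma polar_neq0 r phi : 0 < r -> polar r phi <> C0.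
Proof. intros Hr E. pose proof (Cnorm_polar r phi) as H. rewrite E, Cnorm_C0 in H. lra. Qed.

Lemma RtoC_polar r : RtoC r = polar r 0.
Proof.
  unfold polar. replace (0, 0) with C0 by reflexivity. rewrite Cexp_C0.
  unfold Cmul, RtoC, C1; simpl; f_equal; ring.
Qed.

Lemma polar_add r1 r2 phi : Cadd (polar r1 phi) (polar r2 phi) = polar (r1 + r2) phi.
Proof. unfold polar. rewrite RtoC_add. ring. Qed.

Lemma polar_0 phi : polar 0 phi = C0.
Proof. rewrite polar_components, !Rmult_0_l. reflexivity. Qed.

Lemma polar_opp_shift r phi : polar (- r) (phi - PI) = polar r phi.
Proof.
  rewrite !polar_components, cos_minus, sin_minus, cos_PI, sin_PI. f_equal; ring.
Qed.

Lemma Arg_polar r phi : 0 < r -> - (PI/2) < phi < PI/2 -> Arg (polar r phi) = phi.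
Proof.
  intros Hr Hphi. rewrite polar_components. unfold Arg; simpl.
  assert (0 < cos phi) by (apply cos_gt_0; lra).
  destruct (Rlt_dec 0 (r * cos phi)) as [_|Hn]; [| exfalso; apply Hn; nra].
  replace (r * sin phi / (r * cos phi)) with (tan phi) by (unfold tan; field; lra).
  apply atan_tan; lra.
Qed.

Lemma polar_of_fst_pos w : 0 < fst w -> w = polar (Cnorm w) (atan (snd w / fst w)).
Proof.
  destruct w as [a b]; simpl; intro Ha. rewrite polar_components, cos_atan, sin_atan.
  assert (E : Cnorm (a, b) = a * sqrt (1 + (b / a)²)).
  { unfold Cnorm; simpl.
    replace (a*a+b*b) with ((a*a) * (1 + (b/a)²)) by (unfold Rsqr; field; lra).
    pose proof (Rle_0_sqr (b/a)).
    rewrite sqrt_mult, sqrt_square; try lra; nra. }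
  assert (0 < sqrt (1 + (b / a)²)) by (apply sqrt_lt_R0; pose proof (Rle_0_sqr (b/a)); lra).
  rewrite E. f_equal; field; lra.
Qed.

Lemma Cnorm_fst_pos a b : 0 < a -> 0 < Cnorm (a, b).
Proof. intro. pose proof (Cnorm_fst (a, b)). simpl in *. rewrite Rabs_right in *; lra. Qed.

Lemma Rpower_pos x y : 0 < Rpower x y.
Proof. apply exp_pos. Qed.

Lemma Cpow_RtoC y p : 0 < Cnorm y ->
  Cpow y (RtoC p) = polar (Rpower (Cnorm y) p) (p * Arg y).
Proof.
  intro H. rewrite polar_components. unfold Cpow. destruct (Rlt_dec 0 (Cnorm y)); [| lra].
  unfold Cexp, Cmul, RtoC, Rpower; simpl. f_equal; f_equal; f_equal; ring.
Qed.

Lemma Cnorm_Cpow y p : 0 < Cnorm y -> Cnorm (Cpow y (RtoC p)) = Rpower (Cnorm y) p.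
Proof. intro H. rewrite Cpow_RtoC by auto. apply Cnorm_polar. left; apply Rpower_pos. Qed.

Lemma exp_le x y : x <= y -> exp x <= exp y.
Proof. intros [H|H]; [left; now apply exp_increasing | subst; lra]. Qed.

Lemma exp_INR_mul x n : exp (INR n * x) = exp x ^ n.
Proof.
  induction n as [|n IH].
  - simpl. rewrite Rmult_0_l. apply exp_0.
  - rewrite S_INR, Rmult_plus_distr_r, Rmult_1_l, exp_plus, IH. simpl. ring.
Qed.

(* [exp (u / (N+1))] dominates [(1 + u) / (N + 1)]; raise to the power [N+1]. *)
Lemma pow_1_plus_le_exp u N : 0 <= u -> (1 + u) ^ N <= (INR N + 1) ^ N * exp u.
Proof.
  intro Hu. pose proof (pos_INR N).
  set (e := exp (u / (INR N + 1))).
  assert (He1 : (1 + u) / (INR N + 1) <= e).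
  { unfold e. eapply Rle_trans; [| apply exp_ineq1_le].
    unfold Rdiv. rewrite Rmult_plus_distr_r. apply Rplus_le_compat_r.
    rewrite Rmult_1_l. apply Rle_trans with 1; [| lra].
    rewrite <- Rinv_1 at 2. apply Rinv_le_contravar; lra. }
  assert (He : 1 <= e).
  { unfold e. eapply Rle_trans; [| apply exp_ineq1_le].
    assert (0 <= u / (INR N + 1)) by (apply Rle_mult_inv_pos; lra). lra. }
  replace ((1 + u) ^ N) with (((1 + u) / (INR N + 1)) ^ N * (INR N + 1) ^ N)
    by (rewrite <- Rpow_mult_distr; f_equal; field; lra).
  assert (0 <= (1 + u) / (INR N + 1)) by (apply Rle_mult_inv_pos; lra).
  assert (0 < (INR N + 1) ^ N) by (apply pow_lt; lra).
  assert (((1 + u) / (INR N + 1)) ^ N <= e ^ N) by (apply pow_incr; lra).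
  assert (e ^ N <= exp u).
  { replace (exp u) with (exp (INR (S N) * (u / (INR N + 1))))
      by (f_equal; rewrite S_INR; field; lra).
    rewrite exp_INR_mul. fold e. simpl.
    assert (0 <= e ^ N) by (apply pow_le; lra). nra. }
  nra.
Qed.

Lemma pow_mul_exp_neg_quadratic_bounded a r N : 0 < a ->
  exists C, forall u, 0 <= u -> (1 + u) ^ N * exp (r * u - a * u ^ 2) <= C.
Proof.
  intro Ha. exists ((INR N + 1) ^ N * exp ((r + 1) ^ 2 / (4 * a))). intros u Hu.
  assert (Hq : u + (r * u - a * u ^ 2) <= (r + 1) ^ 2 / (4 * a)).
  { assert (0 <= a * (u - (r + 1) / (2 * a)) ^ 2) by (apply Rmult_le_pos; [lra | apply pow2_ge_0]).
    replace (a * (u - (r + 1) / (2 * a)) ^ 2)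
      with ((r + 1) ^ 2 / (4 * a) - (u + (r * u - a * u ^ 2))) in * by (field; lra).
    lra. }
  pose proof (pow_1_plus_le_exp u N Hu).
  assert (0 <= (INR N + 1) ^ N) by (apply pow_le; pose proof (pos_INR N); lra).
  apply Rle_trans with ((INR N + 1) ^ N * exp u * exp (r * u - a * u ^ 2)).
  - apply Rmult_le_compat_r; [left; apply exp_pos | auto].
  - rewrite Rmult_assoc, <- exp_plus. apply Rmult_le_compat_l; auto. now apply exp_le.
Qed.

Lemma Cnorm_Efac_lower y z r kap :
  1 <= Cnorm y -> Cnorm z <= r -> kap <= cos (5/2 * Arg y) -> 0 < kap ->
  exp (2/5 * kap * Cnorm y ^ 2 - r * Cnorm y) <= Cnorm (Efac y z).
Proof.
  intros Hu Hz Hk Hk0. set (u := Cnorm y) in *. assert (Hu0 : 0 < u) by lra.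
  unfold Efac. rewrite Cnorm_Cexp. apply exp_le.
  replace (fst (Cadd (Cmul (RtoC (2/5)) (Cpow y (RtoC (5/2)))) (Cmul z (Cpow y (RtoC (1/2))))))
    with (2/5 * fst (Cpow y (RtoC (5/2))) + fst (Cmul z (Cpow y (RtoC (1/2)))))
    by (unfold Cadd, Cmul, RtoC; simpl; ring).
  rewrite (Cpow_RtoC y (5/2)), polar_components by auto. cbn [fst]. fold u.
  assert (R1 : u ^ 2 <= Rpower u (5/2)).
  { rewrite <- Rpower_pow by auto. apply Rle_Rpower; auto. simpl; lra. }
  assert (R2 : Rpower u (1/2) <= u).
  { rewrite <- (Rpower_1 u) at 2 by auto. apply Rle_Rpower; lra. }
  assert (R3 : - (r * u) <= fst (Cmul z (Cpow y (RtoC (1/2))))).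
  { pose proof (Cnorm_fst (Cmul z (Cpow y (RtoC (1/2))))) as H.
    rewrite Cnorm_mul, Cnorm_Cpow in H by auto. fold u in H.
    pose proof (Cnorm_ge0 z).
    assert (Cnorm z * Rpower u (1/2) <= r * u)
      by (apply Rmult_le_compat; try lra; left; apply Rpower_pos).
    pose proof (Rle_abs (- fst (Cmul z (Cpow y (RtoC (1 / 2)))))) as Hab.
    rewrite Rabs_Ropp in Hab. lra. }
  assert (0 <= Rpower u (5/2)) by (left; apply Rpower_pos).
  assert (kap * u ^ 2 <= Rpower u (5/2) * cos (5/2 * Arg y)).
  { apply Rle_trans with (kap * Rpower u (5/2)); [apply Rmult_le_compat_l; lra |].
    rewrite Rmult_comm. apply Rmult_le_compat_l; lra. }
  lra.
Qed.

Lemma asympt_leading_bound g p s Cf delta r : asympt g p s Cf -> 0 < delta ->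
  exists Sb y0, 0 <= Sb /\ 1 <= y0 /\ forall y z,
    in_subsector delta y -> y0 <= Cnorm y -> Cnorm z <= r ->
    Cnorm (g y z) * Rpower (Cnorm y) (- p) * Cnorm (Efac y z) <= Sb.
Proof.
  intros Has Hd.
  destruct (Has delta r Hd 0%nat) as [K [y0 HK]].
  exists (Cnorm s + Rabs K), (Rmax y0 1).
  split; [pose proof (Cnorm_ge0 s); pose proof (Rabs_pos K); lra |].
  split; [apply Rmax_r |].
  intros y z Hsub Hy Hz.
  specialize (HK y z Hsub ltac:(pose proof (Rmax_l y0 1); lra) Hz).
  set (u := Cnorm y) in *.
  assert (Hu1 : 1 <= u) by (pose proof (Rmax_r y0 1); lra).
  simpl Csum1 in HK. simpl INR in HK.
  assert (HR : K * Rpower u (- (0 + 1) / 2) <= Rabs K).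
  { assert (Rpower u (- (0 + 1) / 2) <= 1).
    { apply Rle_trans with (Rpower u 0); [apply Rle_Rpower; lra | rewrite Rpower_O; lra]. }
    pose proof (Rpower_pos u (- (0 + 1) / 2)).
    destruct (Rle_dec 0 K).
    - rewrite Rabs_right by lra. nra.
    - pose proof (Rabs_pos K). nra. }
  assert (Hu0 : 0 < Cnorm y) by (unfold u in Hu1; lra).
  unfold u. rewrite <- Cnorm_Cpow, <- !Cnorm_mul by exact Hu0.
  pose proof (Cnorm_reverse_triangle (Cmul (Cmul (g y z) (Cpow y (RtoC (- p)))) (Efac y z))
                (Copp (Cadd s C0))) as H.
  rewrite Cnorm_opp in H. replace (Cadd s C0) with s in * by ring.
  unfold Csub in HK. lra.
Qed.

(* Superexponential decay of the asymptotic factor beats every polynomial weight. *)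
Lemma asympt_weighted_bound g p s Cf delta r kap N :
  asympt g p s Cf -> 0 < delta -> Rabs p <= 1 -> 0 < kap ->
  exists M y1, forall y z, in_subsector delta y -> y1 <= Cnorm y -> Cnorm z <= r ->
    kap <= cos (5/2 * Arg y) -> (1 + Cnorm y) ^ N * Cnorm (g y z) <= M.
Proof.
  intros Has Hd Hp Hk.
  destruct (asympt_leading_bound g p s Cf delta r Has Hd) as [Sb [y0 [HSb [Hy0 HA]]]].
  set (a := 2/5 * kap).
  destruct (pow_mul_exp_neg_quadratic_bounded a r (S N)) as [C HC]; [unfold a; lra |].
  exists (Sb * C), y0. intros y z Hsub Hy Hz Hc.
  specialize (HA y z Hsub Hy Hz).
  pose proof (Cnorm_Efac_lower y z r kap ltac:(lra) Hz Hc Hk) as HE.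
  set (u := Cnorm y) in *. assert (Hu : 0 < u) by lra. fold a in HE.
  set (gn := Cnorm (g y z)) in *. assert (Hgn : 0 <= gn) by apply Cnorm_ge0.
  assert (HP : / u <= Rpower u (- p)).
  { replace (/ u) with (Rpower u (Ropp 1)) by (rewrite Rpower_Ropp, Rpower_1; auto).
    apply Rle_Rpower; [lra |].
    pose proof (Rle_abs p). pose proof (Rle_abs (-p)). rewrite Rabs_Ropp in *. lra. }
  set (q := exp (a * u ^ 2 - r * u)) in *.
  assert (Hq : 0 < q) by apply exp_pos.
  assert (Hg : gn <= Sb * u * exp (r * u - a * u ^ 2)).
  { assert (gn * / u * q <= Sb).
    { eapply Rle_trans; [| exact HA]. fold gn.
      apply Rmult_le_compat; auto; try lra.
      - apply Rmult_le_pos; auto. left; apply Rinv_0_lt_compat; auto.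
      - apply Rmult_le_compat_l; auto. }
    replace (exp (r * u - a * u ^ 2)) with (/ q)
      by (unfold q; rewrite <- exp_Ropp; f_equal; ring).
    apply Rmult_le_reg_r with (/ u * q); [apply Rmult_lt_0_compat; auto; now apply Rinv_0_lt_compat |].
    replace (Sb * u * / q * (/ u * q)) with Sb by (field; lra). rewrite <- Rmult_assoc. exact H. }
  specialize (HC u ltac:(lra)). simpl pow in HC.
  assert (0 <= (1 + u) ^ N) by (apply pow_le; lra).
  pose proof (exp_pos (r * u - a * u ^ 2)).
  apply Rle_trans with ((1 + u) ^ N * (Sb * u * exp (r * u - a * u ^ 2))).
  - apply Rmult_le_compat_l; auto.
  - apply Rle_trans with (Sb * ((1 + u) * (1 + u) ^ N * exp (r * u - a * u ^ 2))).
    + rewrite <- Rmult_assoc. nra.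
    + apply Rmult_le_compat_l; auto.
Qed.

(** * Decay of Sibuya's solution along the line *)

Definition in_decay_sector (kap : R) (y : Cx) : Prop :=
  in_subsector (PI / 5) y /\ kap <= cos (5/2 * Arg y).

Lemma polar_in_decay_sector r psi kap : 0 < r -> Rabs psi <= 2 * PI / 5 ->
  kap <= cos (5/2 * psi) -> in_decay_sector kap (polar r psi).
Proof.
  intros Hr Hpsi Hk. pose proof PI_RGT_0.
  assert (Hpsi' : - (PI / 2) < psi < PI / 2)
    by (unfold Rabs in Hpsi; destruct (Rcase_abs psi); lra).
  split; [split |]; rewrite ?Arg_polar by auto; auto using polar_neq0; lra.
Qed.

Lemma Cnorm_line_lower c d t : Rabs t * Cnorm c - Cnorm d <= Cnorm (line c d t).
Proof.
  unfold line. pose proof (Cnorm_reverse_triangle (Cmul (RtoC t) c) d).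
  rewrite Cnorm_mul, Cnorm_RtoC in H. lra.
Qed.

Lemma atan_le x y : x <= y -> atan x <= atan y.
Proof. intros [H|H]; [left; now apply atan_increasing | subst; lra]. Qed.

Lemma cos_abs x : cos (Rabs x) = cos x.
Proof. unfold Rabs; destruct (Rcase_abs x); [apply cos_neg | reflexivity]. Qed.

Section Line_geometry.
Variables (th a b : R).
Hypothesis Hth : 0 < th <= PI / 6.
Hypothesis Ha : 0 < a.
Hypothesis Hb : 0 < b.
Let al := polar a (- (th / 5)).
Let be := polar b (4 * th / 5).

Lemma line_polar_decomp t :
  line al be t = Cmul (polar 1 (- (th / 5))) (Cadd (RtoC (t * a)) (polar b th)).
Proof.
  unfold line, al, be, polar.
  replace (4 * th / 5) with (- (th / 5) + th) by field.
  rewrite Cexp_i_add, RtoC_mul. change (RtoC 1) with C1. ring.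
Qed.

(* For [t >= 0], [t a + b e^{i th}] has argument in [[0, th]]. *)
Lemma line_right_in_decay_sector t : 0 <= t -> in_decay_sector (sin (th / 2)) (line al be t).
Proof.
  intro Ht. pose proof PI_RGT_0.
  assert (0 < sin th) by (apply sin_gt_0; lra). assert (0 < cos th) by (apply cos_gt_0; lra).
  set (w := (t * a + b * cos th, b * sin th)).
  assert (Hw : 0 < fst w) by (unfold w; simpl; nra).
  set (psi := atan (snd w / fst w)).
  assert (Hpsi : 0 <= psi <= th).
  { unfold psi, w; simpl. split.
    - rewrite <- atan_0. apply atan_le. apply Rle_mult_inv_pos; nra.
    - apply Rle_trans with (atan (tan th)); [| rewrite atan_tan; lra].
      apply atan_le. unfold tan, Rdiv.
      apply Rmult_le_reg_r with (cos th * (t * a + b * cos th)); [apply Rmult_lt_0_compat; nra |].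
      assert (0 <= t * a) by nra. assert (0 < b * cos th) by nra.
      assert (0 <= sin th * t * a) by (rewrite Rmult_assoc; apply Rmult_le_pos; lra).
      field_simplify; lra. }
  replace (line al be t) with (polar (1 * Cnorm w) (- (th / 5) + psi)).
  - apply polar_in_decay_sector.
    + rewrite Rmult_1_l. apply Cnorm_fst_pos. exact Hw.
    + unfold Rabs; destruct (Rcase_abs (- (th / 5) + psi)); lra.
    + rewrite <- cos_abs. apply Rle_trans with (cos (PI / 3)).
      * rewrite cos_PI3, <- sin_PI6. apply sin_incr_1; lra.
      * apply cos_decr_1; try apply Rabs_pos;
          unfold Rabs; destruct (Rcase_abs (5/2 * (- (th / 5) + psi))); lra.
  - rewrite line_polar_decomp, <- polar_mul.
    replace (Cadd (RtoC (t * a)) (polar b th)) with w at 1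
      by (rewrite polar_components; unfold w, Cadd, RtoC; simpl; f_equal; ring).
    rewrite (polar_of_fst_pos w Hw) at 2. reflexivity.
Qed.

(* For [t << 0] the point lies near the negative axis; the rotation [omega^-2] brings it
   to argument in [[(PI - 6 th)/5, (PI - th)/5]]. *)
Lemma line_left_rotated_in_decay_sector t : 2 * b * cos th <= - t * a ->
  in_decay_sector (sin (th / 2)) (Cmul (Cpown Cinvomega 2) (line al be t)).
Proof.
  intro Ht. pose proof PI_RGT_0.
  assert (0 < sin th) by (apply sin_gt_0; lra). assert (0 < cos th) by (apply cos_gt_0; lra).
  set (w := (- t * a - b * cos th, - (b * sin th))).
  assert (Hw : 0 < fst w) by (unfold w; simpl; nra).
  set (psi := atan (snd w / fst w)).
  assert (Hpsi : - th <= psi <= 0).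
  { unfold psi, w; simpl. split.
    - apply Rle_trans with (atan (tan (- th))); [rewrite atan_tan; lra |].
      apply atan_le. unfold tan.
      rewrite sin_neg, cos_neg.
      assert (0 < b * cos th) by nra.
      assert (0 <= sin th * (- t * a - 2 * b * cos th)) by (apply Rmult_le_pos; lra).
      unfold Rdiv.
      apply Rmult_le_reg_r with (cos th * (- t * a - b * cos th)); [apply Rmult_lt_0_compat; nra |].
      field_simplify; lra.
    - rewrite <- atan_0. apply atan_le.
      assert (0 <= b * sin th / (- t * a - b * cos th)) by (apply Rle_mult_inv_pos; nra).
      unfold Rdiv in *. nra. }
  set (phi := - (2 * PI / 5) + - (2 * PI / 5) + - (th / 5) + PI + psi).
  replace (Cmul (Cpown Cinvomega 2) (line al be t)) with (polar (1 * 1 * 1 * Cnorm w) phi).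
  - apply polar_in_decay_sector.
    + rewrite !Rmult_1_l. apply Cnorm_fst_pos. exact Hw.
    + unfold phi, Rabs; destruct (Rcase_abs (- (2 * PI / 5) + - (2 * PI / 5) + - (th / 5) + PI + psi)); lra.
    + rewrite <- cos_shift. apply cos_decr_1; unfold phi; lra.
  - rewrite line_polar_decomp.
    replace (Cadd (RtoC (t * a)) (polar b th)) with (Cmul (polar 1 PI) w)
      by (rewrite !polar_components, cos_PI, sin_PI; unfold w, Cadd, Cmul, RtoC; simpl; f_equal; ring).
    replace (Cpown Cinvomega 2) with (polar 1 (- (2 * PI / 5) + - (2 * PI / 5)))
      by (unfold Cinvomega, polar; rewrite Cexp_i_add; change (RtoC 1) with C1; simpl; ring).
    rewrite (polar_of_fst_pos w Hw) at 2. rewrite !polar_mul. unfold phi, psi. f_equal; ring.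
Qed.

End Line_geometry.

Lemma continuity_pt_Cnorm_of_RCderiv f t L :
  RCderiv f t L -> continuity_pt (fun s => Cnorm (f s)) t.
Proof.
  intro H. rewrite RCderiv_components in H. destruct H as [H1 H2].
  assert (C1 : continuity_pt (fun s => fst (f s)) t)
    by (apply derivable_continuous_pt; exists (fst L); auto).
  assert (C2 : continuity_pt (fun s => snd (f s)) t)
    by (apply derivable_continuous_pt; exists (snd L); auto).
  unfold Cnorm.
  apply (continuity_pt_comp (fun s => fst (f s) * fst (f s) + snd (f s) * snd (f s)) sqrt t).
  - apply continuity_pt_plus; apply continuity_pt_mult; auto.
  - apply continuity_pt_sqrt. nra.
Qed.

Lemma continuity_pt_weighted_line g c d N t : (forall y, exists L, Cderiv g y L) ->
  continuity_pt (fun s => (1 + Cnorm (line c d s)) ^ N * Cnorm (g (line c d s))) t.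
Proof.
  intro Hg. apply continuity_pt_mult.
  - apply (continuity_pt_comp (fun s => 1 + Cnorm (line c d s)) (fun x => x ^ N)).
    + apply continuity_pt_plus; [apply continuity_pt_const; intros x y; auto |].
      apply (continuity_pt_Cnorm_of_RCderiv _ _ c), RCderiv_line.
    + apply derivable_continuous_pt, derivable_pt_pow.
  - destruct (Hg (line c d t)) as [L HL].
    apply (continuity_pt_Cnorm_of_RCderiv _ _ (Cmul c L)), RCderiv_comp_line, HL.
Qed.

Lemma bounded_of_continuous_tails f T M : (forall t, continuity_pt f t) ->
  (forall t, T <= Rabs t -> f t <= M) -> exists M', forall t, f t <= M'.
Proof.
  intros Hf HT.
  destruct (continuity_ab_maj f (- Rabs T) (Rabs T)) as [tm [Htm _]];
    [pose proof (Rabs_pos T); lra | intros; apply Hf |].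
  exists (Rmax M (f tm)). intro t.
  destruct (Rle_dec T (Rabs t)) as [Ht | Ht].
  - eapply Rle_trans; [apply HT, Ht | apply Rmax_l].
  - eapply Rle_trans; [apply Htm | apply Rmax_r].
    pose proof (Rle_abs T). unfold Rabs in Ht |- *.
    destruct (Rcase_abs t), (Rcase_abs T); lra.
Qed.

(* The line [t al + be] leaves to the right inside the decay sector of [g], and to the left
   inside the preimage of that sector under the rotation [omega^-2]; in between it is compact. *)
Lemma decays_on_line_of_sector_bounds th a b g :
  0 < th <= PI / 6 -> 0 < a -> 0 < b ->
  (forall y, exists L, Cderiv g y L) ->
  (forall N, exists M y1, forall y, in_decay_sector (sin (th / 2)) y -> y1 <= Cnorm y ->
     (1 + Cnorm y) ^ N * Cnorm (g y) <= M) ->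
  (forall N, exists M y1, forall y, in_decay_sector (sin (th / 2)) (Cmul (Cpown Cinvomega 2) y) ->
     y1 <= Cnorm y -> (1 + Cnorm y) ^ N * Cnorm (g y) <= M) ->
  decays_on_line g (polar a (- (th / 5))) (polar b (4 * th / 5)).
Proof.
  intros Hth Ha Hb Hg HR HL N.
  destruct (HR N) as [M1 [y1 H1]]. destruct (HL N) as [M2 [y2 H2]].
  apply (bounded_of_continuous_tails _ ((Rmax (Rmax y1 y2) 0 + 2 * b) / a) (Rmax M1 M2)).
  { intro t. apply continuity_pt_weighted_line, Hg. }
  intros t Ht.
  assert (Hfar : Rmax (Rmax y1 y2) 0 + b <= Rabs t * a - b).
  { apply Rmult_le_compat_r with (r := a) in Ht; [| lra].
    unfold Rdiv in Ht. rewrite Rmult_assoc, Rinv_l, Rmult_1_r in Ht by lra. lra. }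
  pose proof (Rmax_l (Rmax y1 y2) 0). pose proof (Rmax_r (Rmax y1 y2) 0).
  pose proof (Rmax_l y1 y2). pose proof (Rmax_r y1 y2).
  pose proof (Cnorm_line_lower (polar a (- (th / 5))) (polar b (4 * th / 5)) t) as Hlow.
  rewrite !Cnorm_polar in Hlow by lra.
  destruct (Rle_dec 0 t) as [Hpos | Hneg].
  - eapply Rle_trans; [| apply Rmax_l].
    apply H1; [now apply line_right_in_decay_sector | lra].
  - eapply Rle_trans; [| apply Rmax_r].
    rewrite Rabs_left in Hfar, Hlow by lra.
    apply H2; [| lra].
    apply line_left_rotated_in_decay_sector; auto.
    pose proof (COS_bound th). nra.
Qed.

Lemma Cderiv_ext f g y L : (forall w, f w = g w) -> Cderiv f y L -> Cderiv g y L.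
Proof.
  intros E H eps He. destruct (H eps He) as [d [Hd Hh]]. exists d; split; auto.
  intros h Hh'. rewrite <- !E. auto.
Qed.

Lemma Cderiv_scale k f y L : Cderiv f y L -> Cderiv (fun w => Cmul k (f w)) y (Cmul k L).
Proof.
  intros H eps He.
  destruct (H (eps / (1 + Cnorm k))) as [d [Hd Hh]].
  { apply Rdiv_lt_0_compat; [| pose proof (Cnorm_ge0 k)]; lra. }
  exists d; split; auto. intros h Hh'. specialize (Hh h Hh').
  replace (Csub (Csub (Cmul k (f (Cadd y h))) (Cmul k (f y))) (Cmul (Cmul k L) h))
    with (Cmul k (Csub (Csub (f (Cadd y h)) (f y)) (Cmul L h))) by ring.
  rewrite Cnorm_mul. pose proof (Cnorm_ge0 k). pose proof (Cnorm_ge0 h).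
  apply Rle_trans with (Cnorm k * (eps / (1 + Cnorm k) * Cnorm h)); [now apply Rmult_le_compat_l |].
  replace (Cnorm k * (eps / (1 + Cnorm k) * Cnorm h))
    with (Cnorm k / (1 + Cnorm k) * (eps * Cnorm h)) by (field; lra).
  rewrite <- (Rmult_1_l (eps * Cnorm h)) at 2. apply Rmult_le_compat_r; [nra |].
  apply Rmult_le_reg_r with (1 + Cnorm k); [lra |].
  unfold Rdiv. rewrite Rmult_assoc, Rinv_l; lra.
Qed.

Lemma Cderiv_comp_mul g q y L : q <> C0 -> Cderiv g (Cmul q y) L ->
  Cderiv (fun w => g (Cmul q w)) y (Cmul q L).
Proof.
  intros Hq H. pose proof (Cnorm_gt0 q Hq) as Hqp. intros eps He.
  destruct (H (eps / Cnorm q)) as [d [Hd Hh]]; [apply Rdiv_lt_0_compat; lra |].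
  exists (d / Cnorm q). split; [apply Rdiv_lt_0_compat; lra |].
  intros h [Hh0 Hh1]. specialize (Hh (Cmul q h)). rewrite Cnorm_mul in Hh.
  replace (Cmul q (Cadd y h)) with (Cadd (Cmul q y) (Cmul q h)) by ring.
  replace (Cmul (Cmul q L) h) with (Cmul L (Cmul q h)) by ring.
  eapply Rle_trans; [apply Hh |].
  - split; [apply Rmult_lt_0_compat; lra |].
    apply Rmult_lt_reg_r with (/ Cnorm q); [apply Rinv_0_lt_compat; lra |].
    rewrite Rmult_comm, <- Rmult_assoc, Rinv_l by lra. unfold Rdiv in Hh1. lra.
  - right. field. lra.
Qed.

Lemma Cderiv_unique f y L1 L2 : Cderiv f y L1 -> Cderiv f y L2 -> L1 = L2.
Proof.
  intros H1 H2.
  assert (Hsmall : forall eps, 0 < eps -> Cnorm (Csub L1 L2) <= 2 * eps).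
  { intros eps He. destruct (H1 eps He) as [d1 [Hd1 P1]]. destruct (H2 eps He) as [d2 [Hd2 P2]].
    set (h := RtoC (Rmin d1 d2 / 2)).
    assert (Hm : 0 < Rmin d1 d2) by (apply Rmin_pos; auto).
    assert (Hh : Cnorm h = Rmin d1 d2 / 2) by (unfold h; rewrite Cnorm_RtoC, Rabs_right; lra).
    specialize (P1 h ltac:(pose proof (Rmin_l d1 d2); lra)).
    specialize (P2 h ltac:(pose proof (Rmin_r d1 d2); lra)).
    pose proof (Cnorm_triangle (Csub (Csub (f (Cadd y h)) (f y)) (Cmul L2 h))
                               (Copp (Csub (Csub (f (Cadd y h)) (f y)) (Cmul L1 h)))) as T.
    replace (Cadd (Csub (Csub (f (Cadd y h)) (f y)) (Cmul L2 h))
                  (Copp (Csub (Csub (f (Cadd y h)) (f y)) (Cmul L1 h))))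
      with (Cmul (Csub L1 L2) h) in T by ring.
    rewrite Cnorm_mul, Cnorm_opp in T.
    apply Rmult_le_reg_r with (Cnorm h); lra. }
  destruct (Req_dec (Cnorm (Csub L1 L2)) 0) as [E|E].
  - apply Cnorm_eq0 in E. replace L1 with (Cadd (Csub L1 L2) L2) by ring. rewrite E. ring.
  - pose proof (Cnorm_ge0 (Csub L1 L2)).
    specialize (Hsmall (Cnorm (Csub L1 L2) / 4) ltac:(lra)). lra.
Qed.

Lemma Cnorm_Cinvomega_pown k : Cnorm (Cpown Cinvomega k) = 1.
Proof. rewrite Cnorm_pown. unfold Cinvomega. rewrite Cnorm_Cexp_i. apply pow1. Qed.

Lemma Stokes_zero_rotation Y zeta : StokesC0 Y zeta C0 ->
  exists k, forall y, Y y zeta = Cmul k (Y (Cmul (Cpown Cinvomega 2) y) (Cmul (Cpown Cinvomega 4) zeta)).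
Proof.
  intros [k Hk]. exists k. intro y. specialize (Hk y). unfold Yk in Hk. simpl Cpown in Hk |- *.
  replace (Cmul C1 y) with y in Hk by ring. replace (Cmul C1 zeta) with zeta in Hk by ring.
  rewrite Hk. ring.
Qed.

Lemma rotation_relation_deriv (G G' : Cx -> Cx -> Cx) zeta k :
  (forall y z, Cderiv (fun w => G w z) y (G' y z)) ->
  (forall y, G y zeta = Cmul k (G (Cmul (Cpown Cinvomega 2) y) (Cmul (Cpown Cinvomega 4) zeta))) ->
  forall y, G' y zeta = Cmul (Cmul k (Cpown Cinvomega 2))
                              (G' (Cmul (Cpown Cinvomega 2) y) (Cmul (Cpown Cinvomega 4) zeta)).
Proof.
  intros HD Hrel y.
  assert (Hq : Cpown Cinvomega 2 <> C0).
  { intro E. pose proof (Cnorm_Cinvomega_pown 2) as H. rewrite E, Cnorm_C0 in H. lra. }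
  apply (Cderiv_unique (fun w => G w zeta) y); [apply HD |].
  eapply Cderiv_ext; [intro w; symmetry; apply Hrel |].
  replace (Cmul (Cmul k (Cpown Cinvomega 2)) _) with
    (Cmul k (Cmul (Cpown Cinvomega 2) (G' (Cmul (Cpown Cinvomega 2) y) (Cmul (Cpown Cinvomega 4) zeta))))
    by ring.
  apply Cderiv_scale, (Cderiv_comp_mul (fun w => G w (Cmul (Cpown Cinvomega 4) zeta))); auto.
Qed.

Lemma decays_on_line_of_asympt (G : Cx -> Cx -> Cx) p s Cf zeta k th a b :
  asympt G p s Cf -> Rabs p <= 1 ->
  (forall y, exists L, Cderiv (fun w => G w zeta) y L) ->
  (forall y, G y zeta = Cmul k (G (Cmul (Cpown Cinvomega 2) y) (Cmul (Cpown Cinvomega 4) zeta))) ->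
  0 < th <= PI / 6 -> 0 < a -> 0 < b ->
  decays_on_line (fun y => G y zeta) (polar a (- (th / 5))) (polar b (4 * th / 5)).
Proof.
  intros Has Hp HD Hrel Hth Ha Hb.
  assert (Hkap : 0 < sin (th / 2)) by (pose proof PI_RGT_0; apply sin_gt_0; lra).
  assert (HPI : 0 < PI / 5) by (pose proof PI_RGT_0; lra).
  apply decays_on_line_of_sector_bounds; auto; intro N;
    destruct (asympt_weighted_bound G p s Cf (PI / 5) (Cnorm zeta) (sin (th / 2)) N Has HPI Hp Hkap)
      as [M [y1 H]].
  - exists M, y1. intros y [Hs Hc] Hy. apply H; auto. lra.
  - exists (Cnorm k * M), y1. intros y [Hs Hc] Hy.
    specialize (H _ (Cmul (Cpown Cinvomega 4) zeta) Hs).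
    rewrite !Cnorm_mul, !Cnorm_Cinvomega_pown, !Rmult_1_l in H.
    specialize (H Hy ltac:(lra) Hc).
    rewrite Hrel, Cnorm_mul. pose proof (Cnorm_ge0 k).
    replace ((1 + Cnorm y) ^ N * (Cnorm k * Cnorm (G (Cmul (Cpown Cinvomega 2) y) (Cmul (Cpown Cinvomega 4) zeta))))
      with (Cnorm k * ((1 + Cnorm y) ^ N * Cnorm (G (Cmul (Cpown Cinvomega 2) y) (Cmul (Cpown Cinvomega 4) zeta))))
      by ring.
    now apply Rmult_le_compat_l.
Qed.

Lemma Sibuya_decays_on_line (Y Yp Ypp : Cx -> Cx -> Cx) B Cc zeta k th a b :
  (forall y z, Cderiv (fun w => Y w z) y (Yp y z)) ->
  (forall y z, Cderiv (fun w => Yp w z) y (Ypp y z)) ->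
  asympt Y (- (3/4)) C1 B -> asympt Yp (3/4) (Copp C1) Cc ->
  (forall y, Y y zeta = Cmul k (Y (Cmul (Cpown Cinvomega 2) y) (Cmul (Cpown Cinvomega 4) zeta))) ->
  0 < th <= PI / 6 -> 0 < a -> 0 < b ->
  decays_on_line (fun y => Y y zeta) (polar a (- (th / 5))) (polar b (4 * th / 5)) /\
  decays_on_line (fun y => Yp y zeta) (polar a (- (th / 5))) (polar b (4 * th / 5)).
Proof.
  intros HYp HYpp HB HCc Hrel Hth Ha Hb. split.
  - apply (decays_on_line_of_asympt Y (- (3/4)) C1 B zeta k); auto.
    + rewrite Rabs_left; lra.
    + intro y. exists (Yp y zeta). apply HYp.
  - apply (decays_on_line_of_asympt Yp (3/4) (Copp C1) Cc zeta (Cmul k (Cpown Cinvomega 2))); auto.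
    + rewrite Rabs_right; lra.
    + intro y. exists (Ypp y zeta). apply HYpp.
    + exact (rotation_relation_deriv Y Yp zeta k HYp Hrel).
Qed.

(** * The plane-wave ansatz *)

Lemma HasD_ext j f f' g g' : (forall x, f x = f' x) -> (forall x, g x = g' x) ->
  HasD j f g -> HasD j f' g'.
Proof.
  intros Ef Eg [h [Hh Hg]]. exists h. split.
  - intro x. eapply RCderiv_ext; [| apply (Hh x)]. intro s. apply Ef.
  - intro x. rewrite <- Eg. apply Hg.
Qed.

Lemma P_annihilates_ext n U V : (forall x, U x = V x) -> P_annihilates n U -> P_annihilates n V.
Proof.
  intros E (U0 & U00 & U000 & U01 & U011 & U0n & U0nn & Un & Unn & Unnn & H0 & H1 & H2 & H3 & H4 & H5
            & H6 & H7 & H8 & H9 & Heq).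
  exists U0, U00, U000, U01, U011, U0n, U0nn, Un, Unn, Unnn.
  repeat split; auto; eapply HasD_ext; eauto; reflexivity.
Qed.

Definition plane_wave (n : nat) (mu : Cx) (lam : R) (x : nat -> R) : Cx :=
  Cexp (Cadd (Cmul Ci (Cmul (RtoC (x 0%nat)) mu)) (Cmul Ci (RtoC (x n * lam)))).

Section Plane_wave_derivatives.
Variables (n : nat) (mu : Cx) (lam : R).
Hypothesis Hn : (2 <= n)%nat.

Definition wave_profile (k : Cx) (g : R -> Cx) (x : nat -> R) : Cx :=
  Cmul k (Cmul (plane_wave n mu lam x) (g (x 1%nat))).

Lemma upd_same x j t : upd x j t j = t.
Proof. unfold upd. now rewrite Nat.eqb_refl. Qed.

Lemma upd_other x j k t : k <> j -> upd x j t k = x k.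
Proof. intro H. unfold upd. now rewrite (proj2 (Nat.eqb_neq k j) H). Qed.

Lemma plane_wave_line_0 x :
  plane_wave n mu lam x = Cexp (line (Cmul Ci mu) (Cmul Ci (RtoC (x n * lam))) (x 0%nat)).
Proof. unfold plane_wave, line. f_equal. ring. Qed.

Lemma plane_wave_line_n x :
  plane_wave n mu lam x = Cexp (line (Cmul Ci (RtoC lam)) (Cmul Ci (Cmul (RtoC (x 0%nat)) mu)) (x n)).
Proof. unfold plane_wave, line. rewrite RtoC_mul. f_equal. ring. Qed.

Lemma HasD_0_wave_profile k g : HasD 0 (wave_profile k g) (wave_profile (Cmul k mu) g).
Proof.
  exists (wave_profile (Cmul k (Cmul Ci mu)) g). split.
  - intro x.
    eapply RCderiv_ext; [| eapply RCderiv_ext_val; [|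
      exact (RCderiv_scale k _ _ _ (RCderiv_mul _ _ _ _ _
               (RCderiv_Cexp_line (Cmul Ci mu) (Cmul Ci (RtoC (x n * lam))) (x 0%nat))
               (RCderiv_const (g (x 1%nat)) _)))]].
    + intro t. unfold wave_profile. rewrite plane_wave_line_0, upd_same, !upd_other by lia.
      reflexivity.
    + unfold wave_profile. rewrite plane_wave_line_0. ring.
  - intro x. unfold wave_profile.
    rewrite <- (Cmul_C1_l (Cmul (Cmul k mu) _)), <- Ci_mul_opp. ring.
Qed.

Lemma HasD_n_wave_profile k g : HasD n (wave_profile k g) (wave_profile (Cmul k (RtoC lam)) g).
Proof.
  exists (wave_profile (Cmul k (Cmul Ci (RtoC lam))) g). split.
  - intro x.
    eapply RCderiv_ext; [| eapply RCderiv_ext_val; [|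
      exact (RCderiv_scale k _ _ _ (RCderiv_mul _ _ _ _ _
               (RCderiv_Cexp_line (Cmul Ci (RtoC lam)) (Cmul Ci (Cmul (RtoC (x 0%nat)) mu)) (x n))
               (RCderiv_const (g (x 1%nat)) _)))]].
    + intro t. unfold wave_profile. rewrite plane_wave_line_n, upd_same, !upd_other by lia.
      reflexivity.
    + unfold wave_profile. rewrite plane_wave_line_n. ring.
  - intro x. unfold wave_profile.
    rewrite <- (Cmul_C1_l (Cmul (Cmul k (RtoC lam)) _)), <- Ci_mul_opp. ring.
Qed.

Lemma HasD_1_wave_profile k g g' : (forall t, RCderiv g t (g' t)) ->
  HasD 1 (wave_profile k g) (wave_profile (Cmul k (Copp Ci)) g').
Proof.
  intro Hg. exists (wave_profile k g'). split.
  - intro x.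
    eapply RCderiv_ext; [| eapply RCderiv_ext_val; [|
      exact (RCderiv_scale (Cmul k (plane_wave n mu lam x)) _ _ _ (Hg (x 1%nat)))]].
    + intro t. unfold wave_profile, plane_wave. rewrite upd_same, !upd_other by lia. ring.
    + unfold wave_profile. ring.
  - intro x. unfold wave_profile. ring.
Qed.

End Plane_wave_derivatives.
(* The four hypotheses kill the coefficients of [X^3], [X^2], [X] and [1]. *)
Declare Scope Cx_scope.
Delimit Scope Cx_scope with C.
Local Infix "+" := Cadd : Cx_scope.
Local Infix "-" := Csub : Cx_scope.
Local Infix "*" := Cmul : Cx_scope.

Lemma ansatz_polynomial_vanishes m c be z L B X :
  (m * (c * c * c * c * c) = B * (L * L * L))%C ->
  (RtoC 3 * (c * c * c * c) * be = L * L)%C ->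
  (z + RtoC 3 * (be * be) = C0)%C ->
  (m * m = RtoC 2 * (c * c) * (be * be * be))%C ->
  (m * m * m + m * (c * c) * ((X * c + be) * (X * c + be) * (X * c + be) + z * (X * c + be))
     - (X * X) * m * (L * L) - B * (X * X * X) * (L * L * L) = C0)%C.
Proof.
  intros K1 K2 K3 K4.
  assert (E3 : RtoC 3 = (C1 + C1 + C1)%C) by (unfold RtoC, Cadd, C1; simpl; f_equal; ring).
  assert (E2 : RtoC 2 = (C1 + C1)%C) by (unfold RtoC, Cadd, C1; simpl; f_equal; ring).
  rewrite E3, E2 in *.
  transitivity ((X * X * X) * (m * (c * c * c * c * c) - B * (L * L * L))
     + (X * X) * m * ((C1 + C1 + C1) * (c * c * c * c) * be - L * L)
     + (X * m * (c * c * c) + m * (c * c) * be) * (z + (C1 + C1 + C1) * (be * be))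
     + m * (m * m - (C1 + C1) * (c * c) * (be * be * be)))%C; [ring |].
  rewrite K1, K2, K3, K4. ring.
Qed.

Section Ansatz_solution.
Variables (n : nat) (mu : Cx) (lam : R) (G G' G'' : Cx -> Cx) (zeta c beta : Cx).
Hypothesis Hn : (2 <= n)%nat.
Hypothesis HG : forall y, Cderiv G y (G' y).
Hypothesis HG' : forall y, Cderiv G' y (G'' y).
Hypothesis HODE : forall y, G'' y = Cmul (Cadd (Cpown y 3) (Cmul zeta y)) (G y).
Hypothesis K1 : (mu * (c * c * c * c * c) = RtoC b0 * (RtoC lam * RtoC lam * RtoC lam))%C.
Hypothesis K2 : (RtoC 3 * (c * c * c * c) * beta = RtoC lam * RtoC lam)%C.
Hypothesis K3 : (zeta + RtoC 3 * (beta * beta) = C0)%C.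
Hypothesis K4 : (mu * mu = RtoC 2 * (c * c) * (beta * beta * beta))%C.

Let g t := G (line c beta t).
Let g' t := Cmul c (G' (line c beta t)).
Let g'' t := Cmul c (Cmul c (G'' (line c beta t))).
Let W := wave_profile n mu lam.

Lemma P_annihilates_ansatz :
  P_annihilates n (fun x => Cmul (plane_wave n mu lam x) (G (line c beta (x 1%nat)))).
Proof.
  assert (Hg : forall t, RCderiv g t (g' t)) by (intro t; apply RCderiv_comp_line, HG).
  assert (Hg' : forall t, RCderiv g' t (g'' t))
    by (intro t; apply RCderiv_scale, RCderiv_comp_line, HG').
  set (L := RtoC lam).
  apply P_annihilates_ext with (W C1 g); [intro x; unfold W, wave_profile, g; ring |].
  exists (W (C1 * mu) g)%C, (W (C1 * mu * mu) g)%C, (W (C1 * mu * mu * mu) g)%C,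
    (W (C1 * mu * Copp Ci) g')%C, (W (C1 * mu * Copp Ci * Copp Ci) g'')%C,
    (W (C1 * mu * L) g)%C, (W (C1 * mu * L * L) g)%C,
    (W (C1 * L) g)%C, (W (C1 * L * L) g)%C, (W (C1 * L * L * L) g)%C.
  do 3 (split; [exact (HasD_0_wave_profile n mu lam Hn _ _) |]).
  split; [exact (HasD_1_wave_profile n mu lam Hn _ _ _ Hg) |].
  split; [exact (HasD_1_wave_profile n mu lam Hn _ _ _ Hg') |].
  do 5 (split; [exact (HasD_n_wave_profile n mu lam Hn _ _) |]).
  intro x. unfold W, wave_profile, g''. rewrite HODE.
  set (X := RtoC (x 1%nat)).
  replace (RtoC (x 1%nat ^ 2)) with (X * X)%C by (unfold X; rewrite RtoC_pow; simpl; ring).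
  replace (RtoC (b0 * x 1%nat ^ 3)) with (RtoC b0 * (X * X * X))%C
    by (unfold X; rewrite RtoC_mul, RtoC_pow; simpl; ring).
  transitivity (plane_wave n mu lam x * g (x 1%nat) *
    (mu * mu * mu - (mu * (Copp Ci * Copp Ci) * (c * c) *
       ((X * c + beta) * (X * c + beta) * (X * c + beta) + zeta * (X * c + beta))
     + (X * X) * mu * (L * L)) - RtoC b0 * (X * X * X) * (L * L * L)))%C.
  - unfold g, line. fold X. simpl Cpown. ring.
  - replace (Copp Ci * Copp Ci)%C with (Copp C1) by (unfold Cmul, Copp, Ci, C1; simpl; f_equal; ring).
    pose proof (ansatz_polynomial_vanishes mu c beta zeta L (RtoC b0) X K1 K2 K3 K4) as H.
    transitivity (plane_wave n mu lam x * g (x 1%nat) *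
      (mu * mu * mu + mu * (c * c) * ((X * c + beta) * (X * c + beta) * (X * c + beta) + zeta * (X * c + beta))
       - (X * X) * mu * (L * L) - RtoC b0 * (X * X * X) * (L * L * L)))%C; [ring |].
    rewrite H. ring.
Qed.
End Ansatz_solution.

(** * Choice of the parameters *)

Lemma b0_pos : 0 < b0.
Proof.
  unfold b0. apply Rdiv_lt_0_compat; [apply sqrt_lt_R0; lra |].
  apply Rmult_lt_0_compat; [lra | apply sqrt_lt_R0; lra].
Qed.

Lemma b0_sqr : b0 * b0 = 2 / 27.
Proof.
  unfold b0. assert (0 < sqrt 3) by (apply sqrt_lt_R0; lra).
  replace (sqrt 2 / (3 * sqrt 3) * (sqrt 2 / (3 * sqrt 3)))
    with ((sqrt 2 * sqrt 2) / (9 * (sqrt 3 * sqrt 3))) by (field; lra).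
  rewrite !sqrt_sqrt by lra. field.
Qed.

Lemma Rpower_fifth x k : 0 < x -> Rpower x (INR k / 5) = Rpower x (1/5) ^ k.
Proof.
  intro. rewrite <- Rpower_pow by apply Rpower_pos. rewrite Rpower_mult. f_equal. field.
Qed.

Definition ansatz_a (R0 : R) : R := Rpower b0 (1/5) * Rpower R0 (- (1/5)).
Definition ansatz_b (R0 : R) : R := 1/3 * Rpower b0 (- (4/5)) * Rpower R0 (4/5).
Definition ansatz_Z (R0 : R) : R := - (1/3) * Rpower b0 (- (8/5)) * Rpower R0 (8/5).

(* With [p = b0^(1/5)] and [q = R0^(1/5)]: [a = p/q], [b = q^4/(3 p^4)], [Z = - q^8/(3 p^8)]. *)
Lemma ansatz_real_relations R0 : 0 < R0 ->
  0 < ansatz_a R0 /\ 0 < ansatz_b R0 /\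
  R0 * ansatz_a R0 ^ 5 = b0 /\ 3 * ansatz_a R0 ^ 4 * ansatz_b R0 = 1 /\
  ansatz_Z R0 + 3 * ansatz_b R0 ^ 2 = 0 /\ R0 ^ 2 = 2 * ansatz_a R0 ^ 2 * ansatz_b R0 ^ 3.
Proof.
  intro HR0. pose proof b0_pos as Hb0.
  set (p := Rpower b0 (1/5)). set (q := Rpower R0 (1/5)).
  assert (Hp : 0 < p) by apply Rpower_pos. assert (Hq : 0 < q) by apply Rpower_pos.
  assert (Hpk : forall k, Rpower b0 (INR k / 5) = p ^ k) by (intro; now apply Rpower_fifth).
  assert (Hqk : forall k, Rpower R0 (INR k / 5) = q ^ k) by (intro; now apply Rpower_fifth).
  assert (p5 : p ^ 5 = b0) by (rewrite <- Hpk; simpl; rewrite <- Rpower_1 by lra; f_equal; field).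
  assert (q5 : q ^ 5 = R0) by (rewrite <- Hqk; simpl; rewrite <- Rpower_1 by lra; f_equal; field).
  assert (Ea : ansatz_a R0 = p / q).
  { unfold ansatz_a. fold p. rewrite Rpower_Ropp. fold q. reflexivity. }
  assert (Eb : ansatz_b R0 = q ^ 4 / (3 * p ^ 4)).
  { unfold ansatz_b. rewrite Rpower_Ropp.
    replace (4/5) with (INR 4 / 5) by (simpl; field). rewrite Hpk, Hqk. field. lra. }
  assert (EZ : ansatz_Z R0 = - (q ^ 8 / (3 * p ^ 8))).
  { unfold ansatz_Z. rewrite Rpower_Ropp.
    replace (8/5) with (INR 8 / 5) by (simpl; field). rewrite Hpk, Hqk. field. lra. }
  assert (p10 : p ^ 10 = 2 / 27) by (rewrite <- b0_sqr, <- p5; ring).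
  rewrite Ea, Eb, EZ. repeat split.
  - apply Rdiv_lt_0_compat; auto.
  - apply Rdiv_lt_0_compat; [apply pow_lt | apply Rmult_lt_0_compat; [| apply pow_lt]]; lra.
  - rewrite <- p5, <- q5. field. lra.
  - field. lra.
  - field. lra.
  - rewrite <- q5.
    replace (2 * (p / q) ^ 2 * (q ^ 4 / (3 * p ^ 4)) ^ 3) with (2 * q ^ 10 / (27 * p ^ 10))
      by (field; lra).
    rewrite p10. field.
Qed.

Section Ansatz_parameters.
Variables (R0 th0 lam : R).
Hypothesis HR0 : 0 < R0.
Hypothesis Hlam : 0 < lam.

Let a := ansatz_a R0.
Let b := ansatz_b R0.
Let sl := sqrt lam.
Let c := Cmul (RtoC sl) (polar a (- (th0 / 5))).

Lemma ansatz_line_coef : c = polar (sl * a) (- (th0 / 5)).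
Proof. unfold c, polar. rewrite RtoC_mul. ring. Qed.

Lemma ansatz_relations :
  let mu := polar (sl * R0) th0 in
  let beta := polar b (4 * th0 / 5) in
  let zeta := polar (ansatz_Z R0) (8 * th0 / 5) in
  (mu * (c * c * c * c * c) = RtoC b0 * (RtoC lam * RtoC lam * RtoC lam))%C /\
  (RtoC 3 * (c * c * c * c) * beta = RtoC lam * RtoC lam)%C /\
  (zeta + RtoC 3 * (beta * beta) = C0)%C /\
  (mu * mu = RtoC 2 * (c * c) * (beta * beta * beta))%C.
Proof.
  intros mu beta zeta.
  destruct (ansatz_real_relations R0 HR0) as (_ & _ & Ea & Eb & EZ & ER).
  fold a b in Ea, Eb, EZ, ER.
  assert (Esl : lam = sl * sl) by (symmetry; apply sqrt_sqrt; lra).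
  unfold mu, beta, zeta. rewrite ansatz_line_coef, (RtoC_polar b0), (RtoC_polar lam),
    (RtoC_polar 3), (RtoC_polar 2), !polar_mul.
  repeat split.
  - f_equal; [| field]. rewrite <- Ea, Esl. ring.
  - f_equal; [| field]. rewrite Esl.
    transitivity (sl ^ 4 * (3 * a ^ 4 * b)); [ring | rewrite Eb; ring].
  - match goal with |- Cadd _ (polar _ ?phi) = _ => replace phi with (8 * th0 / 5) by field end.
    rewrite polar_add. replace (ansatz_Z R0 + 3 * (b * b)) with 0 by (rewrite <- EZ; ring).
    rewrite !polar_0. reflexivity.
  - f_equal; [| field]. replace (sl * R0 * (sl * R0)) with (sl ^ 2 * R0 ^ 2) by ring.
    rewrite ER. ring.
Qed.

End Ansatz_parameters.

Lemma ansatz_parameters_exist zeta0 : arg_in zeta0 PI (19 * PI / 15) ->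
  exists R0 th0, 0 < R0 /\ 0 < th0 <= PI / 6 /\ polar (ansatz_Z R0) (8 * th0 / 5) = zeta0.
Proof.
  intros [Hz0 [th [[Hth1 Hth2] Ez]]]. pose proof PI_RGT_0. pose proof b0_pos.
  set (Z := Cnorm zeta0) in *. assert (HZ : 0 < Z) by (now apply Cnorm_gt0).
  set (X := 3 * Z * Rpower b0 (8/5)).
  assert (HX : 0 < X) by (unfold X; pose proof (Rpower_pos b0 (8/5)); nra).
  exists (Rpower X (5/8)), (5 * (th - PI) / 8).
  split; [apply Rpower_pos | split; [lra |]].
  assert (HZc : ansatz_Z (Rpower X (5/8)) = - Z).
  { unfold ansatz_Z. rewrite Rpower_mult, Rpower_Ropp.
    replace (5/8 * (8/5)) with 1 by field. rewrite Rpower_1 by auto.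
    unfold X. pose proof (Rpower_pos b0 (8/5)). field. lra. }
  rewrite HZc. replace (8 * (5 * (th - PI) / 8) / 5) with (th - PI) by field.
  rewrite polar_opp_shift. symmetry. exact Ez.
Qed.

Theorem mainTheorem8 (n : nat) (Hn : (2 <= n)%nat)
  (Y : Cx -> Cx -> Cx) (HY : IsSibuya Y)
  (zeta0 : Cx) (Hzero : StokesC0 Y zeta0 C0)
  (Harg : arg_in zeta0 PI (19 * PI / 15)) :
  exists R0 th0 : R, 0 < R0 /\ 0 < th0 <= PI / 6 /\
    Cmul (RtoC (- (1/3) * Rpower b0 (- (8/5)) * Rpower R0 (8/5)))
         (Cexp (0, 8 * th0 / 5)) = zeta0 /\
    let alpha := Cmul (RtoC (Rpower b0 (1/5) * Rpower R0 (- (1/5))))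
                      (Cexp (0, - (th0 / 5))) in
    let beta := Cmul (RtoC ((1/3) * Rpower b0 (- (4/5)) * Rpower R0 (4/5)))
                     (Cexp (0, 4 * th0 / 5)) in
    let arg1 := fun (lam x1 : R) => Cadd (Cmul (RtoC (sqrt lam * x1)) alpha) beta in
    (forall lam : R, 0 < lam ->
       P_annihilates n (fun x : nat -> R =>
         Cmul (Cexp (Cadd (Cmul Ci (Cmul (RtoC (x 0%nat * sqrt lam * R0)) (Cexp (0, th0))))
                          (Cmul Ci (RtoC (x n * lam)))))
              (Y (arg1 lam (x 1%nat)) zeta0))) /\
    (forall lam : R, 0 < lam -> InSchwartz (fun x1 => Y (arg1 lam x1) zeta0)) /\
    (exists Mb : R, forall lam x1 : R, 0 < lam -> Cnorm (Y (arg1 lam x1) zeta0) <= Mb).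
Proof.
  destruct HY as (_ & Yp & Ypp & HYp & HYpp & HODE & [B HB] & [Cc HCc]).
  destruct (Stokes_zero_rotation Y zeta0 Hzero) as [k Hrel].
  destruct (ansatz_parameters_exist zeta0 Harg) as (R0 & th0 & HR0 & Hth0 & Hzeta).
  exists R0, th0. split; [exact HR0 | split; [exact Hth0 | split; [exact Hzeta |]]].
  intros alpha beta arg1.
  destruct (ansatz_real_relations R0 HR0) as (Ha & Hb & _).
  destruct (Sibuya_decays_on_line Y Yp Ypp B Cc zeta0 k th0 (ansatz_a R0) (ansatz_b R0))
    as [DY DYp]; auto.
  assert (Harg1 : forall lam x1, arg1 lam x1 = line (Cmul (RtoC (sqrt lam)) alpha) beta x1)
    by (intros; unfold arg1, line; rewrite RtoC_mul; ring).
  split; [| split].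
  - intros lam Hlam.
    destruct (ansatz_relations R0 th0 lam HR0 Hlam) as (K1 & K2 & K3 & K4). rewrite Hzeta in K3.
    eapply P_annihilates_ext; [| exact (P_annihilates_ansatz n _ lam _ _ _ _ _ _ Hn
      (fun y => HYp y zeta0) (fun y => HYpp y zeta0) (fun y => HODE y zeta0) K1 K2 K3 K4)].
    intro x. rewrite Harg1. unfold plane_wave, polar. f_equal. f_equal. rewrite !RtoC_mul. ring.
  - intros lam Hlam.
    apply (InSchwartz_ext (fun t => Y (line (Cmul (RtoC (sqrt lam)) alpha) beta t) zeta0));
      [intro t; now rewrite Harg1 |].
    apply (InSchwartz_of_decays_on_line (fun y => Y y zeta0) (fun y => Yp y zeta0) zeta0);
      auto using decays_on_line_rescale.
    + intro y. rewrite <- HODE. apply HYpp.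
    + change alpha with (polar (ansatz_a R0) (- (th0 / 5))).
      rewrite ansatz_line_coef. apply polar_neq0.
      apply Rmult_lt_0_compat; [now apply sqrt_lt_R0 | exact Ha].
  - destruct (decays_on_line_bounded _ _ _ DY) as [M HM]. exists M. intros lam x1 _.
    rewrite Harg1, line_rescale. apply HM.
Qed.
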